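(* Let $f,g\in\mathcal{F}$ with $g$ continuous on $[0,1]$ and $f\succsim g$. Then $I\in\mathcal{I}_{f,g}$ is an extreme point of $\mathcal{I}_{f,g}$ if and only if there exists a (possibly empty) countable collection $\{X_n\}$ of non-degenerate disjoint intervals $X_n=[a_n,b_n]\subseteq[0,1]$ such that: (1) for all $x\notin\bigcup_n X_n$, $I(x)\in\{I_f(x),I_g(x)\}$; (2) for each $n$, $I|_{X_n}$ is affine, $I_f<I<I_g$ on $\mathrm{int}(X_n)$, and at least one of: (a) there is $y\in\{a_n,b_n\}$ with $I(x)=I_g(y)+I_g'(y)(x-y)$ for all $x\in X_n$; (b) for each $x\in\{a_n,b_n\}$, either $I(x)=I_f(x)$, or there exists $m$ with $b_m=a_n$ or $b_n=a_m$ (the shared endpoint being $x$) such that $I|_{X_m}$ satisfies (a).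
   Context: $\mathcal{F}=\{f\in L^1([0,1]): f$ non-decreasing$\}$, $m_f=\int_0^1 f$, $I_\varphi(x)=\int_0^x\varphi-m_\varphi$; $f\succsim g$ means $m_f=m_g$ and $\int_0^x f\le\int_0^x g$ for all $x$. $\mathcal{I}_{f,g}=\{I:[0,1]\to\mathbb{R}$ continuous convex$:\ I_f\le I\le I_g,\ \partial I(x)\subseteq[f(0),f(1)]\ \forall x\in(0,1)\}$. *)

From Stdlib Require Import Reals.
From Coquelicot Require Import Coquelicot.
Open Scope R_scope.

Definition I01 (x : R) : Prop := 0 <= x <= 1.

(* f ∈ F : non-decreasing on [0,1] and integrable on [0,1]
   (integrability is automatic for monotone functions on [0,1]) *)
Definition inF (f : R -> R) : Prop :=
  (forall x y, 0 <= x -> x <= y -> y <= 1 -> f x <= f y) /\ ex_RInt f 0 1.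

Definition mean (phi : R -> R) : R := RInt phi 0 1.

Definition Iphi (phi : R -> R) (x : R) : R := RInt phi 0 x - mean phi.

Definition majorizes (f g : R -> R) : Prop :=
  mean f = mean g /\ forall x, I01 x -> RInt f 0 x <= RInt g 0 x.

Definition cont01 (h : R -> R) : Prop :=
  forall x, I01 x -> filterlim h (within I01 (locally x)) (locally (h x)).

Definition convex01 (h : R -> R) : Prop :=
  forall x y t, I01 x -> I01 y -> 0 <= t <= 1 ->
    h (t * x + (1 - t) * y) <= t * h x + (1 - t) * h y.

Definition subdiff (h : R -> R) (x s : R) : Prop :=
  forall y, I01 y -> h x + s * (y - x) <= h y.

Definition inIfg (f g : R -> R) (h : R -> R) : Prop :=
  cont01 h /\ convex01 h /\
  (forall x, I01 x -> Iphi f x <= h x <= Iphi g x) /\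
  (forall x s, 0 < x < 1 -> subdiff h x s -> f 0 <= s <= f 1).

(* extreme point of I_{f,g}; functions are identified by their values on [0,1] *)
Definition extreme_Ifg (f g : R -> R) (h : R -> R) : Prop :=
  inIfg f g h /\
  forall h1 h2 lam, inIfg f g h1 -> inIfg f g h2 -> 0 < lam < 1 ->
    (forall x, I01 x -> h x = lam * h1 x + (1 - lam) * h2 x) ->
    forall x, I01 x -> h1 x = h2 x.

Definition deriv01 (h : R -> R) (y d : R) : Prop :=
  filterlim (fun z => (h z - h y) / (z - y))
    (within (fun z => I01 z /\ z <> y) (locally y)) (locally d).

Definition cond_a (h Ig : R -> R) (a b : R) : Prop :=
  exists y, (y = a \/ y = b) /\
    exists d, deriv01 Ig y d /\
      forall x, a <= x <= b -> h x = Ig y + d * (x - y).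

(* the characterization of extreme points via a countable family of intervals
   X_n = [a n, b n], n ranging over the (possibly empty, finite or infinite)
   index set N ⊆ nat *)
Definition interval_structure (f g h : R -> R) : Prop :=
  exists (N : nat -> Prop) (a b : nat -> R),
    (forall n, N n -> 0 <= a n /\ a n < b n /\ b n <= 1) /\
    (* pairwise disjoint (interiors) *)
    (forall n m, N n -> N m -> n <> m -> b n <= a m \/ b m <= a n) /\
    (forall x, I01 x -> (forall n, N n -> ~ (a n <= x <= b n)) ->
       h x = Iphi f x \/ h x = Iphi g x) /\
    (forall n, N n ->
       (exists al be, forall x, a n <= x <= b n -> h x = al + be * x) /\
       (forall x, a n < x < b n -> Iphi f x < h x < Iphi g x) /\
       (cond_a h (Iphi g) (a n) (b n) \/
        (forall x, (x = a n \/ x = b n) ->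
           h x = Iphi f x \/
           exists m, N m /\
             ((b m = a n /\ x = a n) \/ (b n = a m /\ x = b n)) /\
             cond_a h (Iphi g) (a m) (b m)))).

(* Sufficiency. If [h = lam h1 + (1 - lam) h2] with [h1, h2] in [I_{f,g}], then [h1 = h2]
   wherever [h] touches [I_f] or [I_g]. On an affine piece of [h] both parts are affine, so
   [h1 - h2] vanishes on the piece once it vanishes at its ends; and on a piece tangent to
   [I_g] at an end both parts must follow that tangent, since they stay below [I_g].

   Necessity. On the open set where [I_f < h < I_g], [h] is locally affine: otherwise there
   are [t1 < t2 < t3 < t4] with no affine chord between consecutive points, and a suitable
   combination of the functions "h on [[t_i, t_(i+1)]], continued by supporting lines"
   is a perturbation supported in [[t1, t4]] that can be added to [h] with either sign,
   contradicting extremality. The maximal affine pieces, found through a dense sequence of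
   rationals, are the [X_n]. At an end of a piece where [h <> I_f], either [h = I_g], which
   gives (a) by tangency, or the next piece meets it in a kink; if neither piece satisfied
   (a), the same perturbation applied to the tent formed by the two pieces would again
   contradict extremality. *)

From Stdlib Require Import Reals Lra Psatz Classical ClassicalEpsilon ZArith Cantor.
From Coquelicot Require Import Coquelicot.
Open Scope R_scope.

(** * Continuity and convexity on [[0, 1]] *)

Lemma filterlim_within_eps (F : R -> R) (D : R -> Prop) (x l : R) :
  filterlim F (within D (locally x)) (locally l) <->
  (forall eps, 0 < eps -> exists del, 0 < del /\
     forall y, D y -> Rabs (y - x) < del -> Rabs (F y - l) < eps).
Proof.
  rewrite filterlim_locally. split.
  - intros H eps Heps. destruct (H (mkposreal eps Heps)) as [d Hd].
    exists d. split; [apply cond_pos|]. intros y Dy Hy. exact (Hd y Hy Dy).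
  - intros H eps. destruct (H eps (cond_pos eps)) as [d [Hd0 Hd]].
    exists (mkposreal d Hd0). intros y Hy Dy. apply Hd; auto.
Qed.

Definition eps_continuous (F : R -> R) x :=
  forall e, 0 < e -> exists d, 0 < d /\ forall y, Rabs (y - x) < d -> Rabs (F y - F x) < e.

Lemma continuity_pt_of_eps (F : R -> R) x : eps_continuous F x -> continuity_pt F x.
Proof.
  intros H e He. destruct (H e He) as [d [Hd Hy]]. exists d. split; auto.
  intros y [_ Hyd]. apply Hy. exact Hyd.
Qed.

Lemma eps_continuous_minus (F G : R -> R) x :
  eps_continuous F x -> eps_continuous G x -> eps_continuous (fun y => F y - G y) x.
Proof.
  intros HF HG e He.
  destruct (HF (e / 2) ltac:(lra)) as [d [Hd Hn]], (HG (e / 2) ltac:(lra)) as [d' [Hd' Hn']].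
  exists (Rmin d d'). split; [apply Rmin_pos; lra|]. intros y Hy.
  pose proof (Rmin_l d d'); pose proof (Rmin_r d d').
  specialize (Hn y ltac:(lra)); specialize (Hn' y ltac:(lra)).
  apply Rabs_lt_between in Hn, Hn'. apply Rabs_lt_between. lra.
Qed.

Lemma pos_near_of_continuous (F : R -> R) x p q r : eps_continuous F x ->
  0 <= p -> 0 < p * F x + q + r * x ->
  exists d, 0 < d /\ forall y, Rabs (y - x) < d -> 0 < p * F y + q + r * y.
Proof.
  intros HF Hp Hx. set (c := p * F x + q + r * x) in *.
  pose proof (Rabs_pos r).
  destruct (HF (c / (2 * (p + 1))) ltac:(apply Rdiv_lt_0_compat; lra)) as [d [Hd Hnear]].
  exists (Rmin d (c / (2 * (Rabs r + 1)))).
  split; [apply Rmin_pos; [lra|apply Rdiv_lt_0_compat; lra]|].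
  intros y Hy. pose proof (Rmin_l d (c / (2 * (Rabs r + 1)))) as Hd1.
  pose proof (Rmin_r d (c / (2 * (Rabs r + 1)))) as Hd2.
  specialize (Hnear y ltac:(lra)). apply Rabs_lt_between in Hnear.
  assert (Hpe : p * (c / (2 * (p + 1))) <= c / 2).
  { apply Rle_trans with ((p + 1) * (c / (2 * (p + 1)))).
    - apply Rmult_le_compat_r; [left; apply Rdiv_lt_0_compat|]; lra.
    - right; field; lra. }
  assert (Hre : Rabs (r * (y - x)) < c / 2).
  { rewrite Rabs_mult. apply Rle_lt_trans with ((Rabs r + 1) * Rabs (y - x));
    [rewrite Rmult_plus_distr_r; pose proof (Rabs_pos (y - x)); lra|].
    apply Rlt_le_trans with ((Rabs r + 1) * (c / (2 * (Rabs r + 1)))); [apply Rmult_lt_compat_l; lra|].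
    right; field; lra. }
  apply Rabs_lt_between in Hre.
  assert (p * (F x - F y) <= p * (c / (2 * (p + 1)))) by (apply Rmult_le_compat_l; lra).
  unfold c in *. lra.
Qed.

Lemma eq_at_limit_point (F : R -> R) b al be :
  I01 b -> filterlim F (within I01 (locally b)) (locally (F b)) ->
  (forall d, 0 < d -> exists y, I01 y /\ Rabs (y - b) < d /\ F y = al + be * y) ->
  F b = al + be * b.
Proof.
  intros Hb Hc Hline. apply NNPP. intros Hne.
  set (D := Rabs (F b - (al + be * b))).
  assert (HD : 0 < D) by (apply Rabs_pos_lt; lra).
  destruct (proj1 (filterlim_within_eps _ _ _ _) Hc (D / 2) ltac:(lra)) as [d [Hd Hnear]].
  pose proof (Rabs_pos be).
  destruct (Hline (Rmin d (D / (2 * (Rabs be + 1))))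
              ltac:(apply Rmin_pos; [lra|apply Rdiv_lt_0_compat; lra])) as [y [Hy [Hyb Ey]]].
  pose proof (Rmin_l d (D / (2 * (Rabs be + 1)))). pose proof (Rmin_r d (D / (2 * (Rabs be + 1)))).
  specialize (Hnear y Hy ltac:(lra)). rewrite Ey in Hnear.
  assert (Hbe : Rabs (be * (y - b)) < D / 2).
  { rewrite Rabs_mult. apply Rle_lt_trans with ((Rabs be + 1) * Rabs (y - b));
    [rewrite Rmult_plus_distr_r; pose proof (Rabs_pos (y - b)); lra|].
    apply Rlt_le_trans with ((Rabs be + 1) * (D / (2 * (Rabs be + 1)))); [apply Rmult_lt_compat_l; lra|].
    right; field; lra. }
  assert (D <= Rabs (al + be * y - F b) + Rabs (be * (y - b))).
  { unfold D. replace (F b - (al + be * b)) with (- (al + be * y - F b) + be * (y - b)) by ring.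
    eapply Rle_trans; [apply Rabs_triang|]. rewrite Rabs_Ropp. lra. }
  lra.
Qed.

Lemma exists_small_scale (A B s : R) : 0 <= A -> 0 <= B -> 0 < s ->
  exists eps, 0 < eps /\ eps * A <= 1 /\ eps * B <= s.
Proof.
  intros HA HB Hs. set (u := 1 / (A + 1)). set (v := s / (B + 1)).
  assert (Hu : u * (A + 1) = 1) by (unfold u; field; lra).
  assert (Hv : v * (B + 1) = s) by (unfold v; field; lra).
  assert (Hu0 : 0 < u) by (unfold u; apply Rdiv_lt_0_compat; lra).
  assert (Hv0 : 0 < v) by (unfold v; apply Rdiv_lt_0_compat; lra).
  pose proof (Rmin_l u v). pose proof (Rmin_r u v). pose proof (Rmin_pos u v Hu0 Hv0).
  exists (Rmin u v). nra.
Qed.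

Section Convexity.
Variable F : R -> R.
Hypothesis HF : convex01 F.

Lemma convex01_chord p q r : 0 <= p -> p < q -> q < r -> r <= 1 ->
  (r - p) * F q <= (r - q) * F p + (q - p) * F r.
Proof.
  intros Hp Hpq Hqr Hr.
  set (t := (r - q) / (r - p)).
  assert (Ht : 0 <= t <= 1).
  { unfold t; split; [apply Rmult_le_pos; [lra|left; apply Rinv_0_lt_compat; lra]|].
    apply Rle_div_l; lra. }
  assert (Hq : t * p + (1 - t) * r = q) by (unfold t; field; lra).
  pose proof (HF p r t ltac:(unfold I01; lra) ltac:(unfold I01; lra) Ht) as H.
  rewrite Hq in H. apply (Rmult_le_compat_l (r - p)) in H; [|lra].
  replace ((r - p) * (t * F p + (1 - t) * F r)) with ((r - q) * F p + (q - p) * F r) in H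
    by (unfold t; field; lra).
  exact H.
Qed.

(* The supremum of the left difference quotients at x is a subgradient. *)
Lemma convex01_subdiff_exists x : 0 < x < 1 -> exists s, subdiff F x s.
Proof.
  intros Hx.
  set (E := fun v => exists y, 0 <= y < x /\ v = (F x - F y) / (x - y)).
  assert (Hb : forall y z, 0 <= y < x -> x < z <= 1 ->
            (F x - F y) / (x - y) <= (F z - F x) / (z - x)).
  { intros y z Hy Hz. pose proof (convex01_chord y x z ltac:(lra) ltac:(lra) ltac:(lra) ltac:(lra)).
    apply Rle_div_l; [lra|]. unfold Rdiv. rewrite Rmult_assoc.
    apply (Rmult_le_reg_r (z - x)); [lra|].
    replace ((F z - F x) * (/ (z - x) * (x - y)) * (z - x)) with ((F z - F x) * (x - y))
      by (field; lra).
    nra. }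
  assert (HE : bound E) by (exists ((F 1 - F x) / (1 - x)); intros v [y [Hy ->]]; apply Hb; lra).
  assert (HE2 : exists v, E v) by (exists ((F x - F 0) / (x - 0)), 0; split; [lra|reflexivity]).
  destruct (completeness E HE HE2) as [s [Hs1 Hs2]].
  exists s. intros y Hy. unfold I01 in Hy.
  destruct (Rtotal_order y x) as [Hlt | [-> | Hgt]].
  - assert (Hv : (F x - F y) / (x - y) <= s) by (apply Hs1; exists y; split; [lra|reflexivity]).
    apply Rle_div_l in Hv; lra.
  - lra.
  - assert (Hv : s <= (F y - F x) / (y - x)).
    { apply Hs2. intros v [w [Hw ->]]. apply Hb; lra. }
    apply Rle_div_r in Hv; lra.
Qed.

Lemma subdiff_mono x t s m : I01 x -> I01 t -> t < x -> subdiff F t m -> subdiff F x s -> m <= s.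
Proof.
  intros Hx Ht Htx Hm Hs. pose proof (Hm x Hx). pose proof (Hs t Ht). nra.
Qed.

Lemma convex01_locally_lipschitz x : 0 < x < 1 ->
  exists M, 0 < M /\ forall y, x / 2 < y < (x + 1) / 2 -> Rabs (F y - F x) <= M * Rabs (y - x).
Proof.
  intros Hx. destruct (convex01_subdiff_exists x Hx) as [s Hs].
  set (a := x / 2). set (b := (x + 1) / 2).
  set (A := (F x - F a) / (x - a)). set (B := (F b - F x) / (b - x)).
  assert (HA : F x - F a = A * (x - a)) by (unfold A, a; field; lra).
  assert (HB : F b - F x = B * (b - x)) by (unfold B, b; field; lra).
  pose proof (Rle_abs s); pose proof (Rle_abs A); pose proof (Rle_abs B).
  pose proof (Rle_abs (-s)); pose proof (Rle_abs (-A)); pose proof (Rle_abs (-B)).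
  rewrite Rabs_Ropp in *.
  exists (Rabs s + Rabs A + Rabs B + 1). split; [lra|].
  intros y Hy. fold a b in Hy.
  assert (Hsy : F x + s * (y - x) <= F y) by (apply Hs; unfold I01, a, b in *; lra).
  destruct (Rtotal_order y x) as [Hlt|[->|Hgt]].
  - pose proof (convex01_chord a y x ltac:(unfold a; lra) ltac:(lra) ltac:(lra) ltac:(lra)) as Hc.
    assert (Hk : F y - F x <= (x - y) * (- A)).
    { apply (Rmult_le_reg_l (x - a)); [unfold a; lra|].
      replace (F a) with (F x - A * (x - a)) in Hc by lra. nra. }
    rewrite (Rabs_left1 (y - x)) by lra. apply Rabs_le. nra.
  - rewrite !Rminus_diag, !Rabs_R0. lra.
  - pose proof (convex01_chord x y b ltac:(lra) ltac:(lra) ltac:(lra) ltac:(unfold b; lra)) as Hc.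
    assert (Hk : F y - F x <= (y - x) * B).
    { apply (Rmult_le_reg_l (b - x)); [unfold b; lra|].
      replace (F b) with (F x + B * (b - x)) in Hc by lra. nra. }
    rewrite (Rabs_right (y - x)) by lra. apply Rabs_le. nra.
Qed.

Lemma convex01_continuous x : 0 < x < 1 -> eps_continuous F x.
Proof.
  intros Hx eps He. destruct (convex01_locally_lipschitz x Hx) as [M [HM HL]].
  set (r := Rmin (Rmin (x / 2) ((1 - x) / 2)) (eps / (2 * M))).
  assert (Hr1 : r <= x / 2) by (unfold r; eapply Rle_trans; [apply Rmin_l|apply Rmin_l]).
  assert (Hr2 : r <= (1 - x) / 2) by (unfold r; eapply Rle_trans; [apply Rmin_l|apply Rmin_r]).
  assert (Hr3 : r <= eps / (2 * M)) by apply Rmin_r.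
  exists r. split; [unfold r; repeat apply Rmin_pos; try apply Rdiv_lt_0_compat; lra|].
  intros y Hy. pose proof (proj1 (Rabs_lt_between _ _) Hy).
  eapply Rle_lt_trans; [apply HL; lra|].
  apply Rle_lt_trans with (M * (eps / (2 * M))); [apply Rmult_le_compat_l; lra|].
  replace (M * (eps / (2 * M))) with (eps / 2) by (field; lra). lra.
Qed.

Lemma convex01_continuity_pt x : 0 < x < 1 -> continuity_pt F x.
Proof. intros Hx. apply continuity_pt_of_eps, convex01_continuous, Hx. Qed.

Lemma convex01_cont_within x : 0 < x < 1 ->
  filterlim F (within I01 (locally x)) (locally (F x)).
Proof.
  intros Hx. apply filterlim_within_eps. intros eps He.
  destruct (convex01_continuous x Hx eps He) as [d [Hd H]]. exists d. auto.
Qed.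

End Convexity.

Lemma convex01_of_subdiff (F : R -> R) :
  (forall x, 0 < x < 1 -> exists s, subdiff F x s) -> convex01 F.
Proof.
  intros H x y t Hx Hy Ht. unfold I01 in *.
  destruct (Req_dec t 0) as [->|Ht0].
  { replace (0 * x + (1 - 0) * y) with y by ring. lra. }
  destruct (Req_dec t 1) as [->|Ht1].
  { replace (1 * x + (1 - 1) * y) with x by ring. lra. }
  destruct (Req_dec x y) as [<-|Hxy].
  { replace (t * x + (1 - t) * x) with x by ring. lra. }
  set (z := t * x + (1 - t) * y).
  assert (Hz : 0 < z < 1) by (unfold z; destruct (Rlt_or_le x y); split; nra).
  destruct (H z Hz) as [s Hs].
  pose proof (Hs x ltac:(unfold I01; lra)). pose proof (Hs y ltac:(unfold I01; lra)).
  assert (t * (x - z) + (1 - t) * (y - z) = 0) by (unfold z; ring).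
  assert (t * (F z + s * (x - z)) <= t * F x) by (apply Rmult_le_compat_l; lra).
  assert ((1 - t) * (F z + s * (y - z)) <= (1 - t) * F y) by (apply Rmult_le_compat_l; lra).
  fold z. nra.
Qed.

Lemma convex01_ext (F G : R -> R) : (forall y, F y = G y) -> convex01 G -> convex01 F.
Proof. intros E HG x y t Hx Hy Ht. rewrite !E. apply HG; auto. Qed.

Lemma convex01_add (F G : R -> R) : convex01 F -> convex01 G -> convex01 (fun y => F y + G y).
Proof.
  intros HF HG x y t Hx Hy Ht. pose proof (HF x y t Hx Hy Ht). pose proof (HG x y t Hx Hy Ht). lra.
Qed.

Lemma convex01_scale (c : R) (F : R -> R) : 0 <= c -> convex01 F -> convex01 (fun y => c * F y).
Proof.
  intros Hc HF x y t Hx Hy Ht. pose proof (HF x y t Hx Hy Ht) as H.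
  apply (Rmult_le_compat_l c) in H; auto. lra.
Qed.

Lemma convex01_add_affine (F : R -> R) A B : convex01 F -> convex01 (fun y => F y + (A + B * y)).
Proof. intros HF x y t Hx Hy Ht. pose proof (HF x y t Hx Hy Ht). nra. Qed.

(** * The functions [Iphi] *)

Section Primitive.
Variable f : R -> R.
Hypothesis Hf : inF f.

Lemma inF_bounds t : I01 t -> f 0 <= f t <= f 1.
Proof. intros [H0 H1]. split; apply Hf; lra. Qed.

Lemma ex_RInt_inF a b : I01 a -> I01 b -> ex_RInt f a b.
Proof.
  assert (Hle : forall a b, 0 <= a -> a <= b -> b <= 1 -> ex_RInt f a b).
  { intros a' b' Ha Hab Hb. apply (ex_RInt_Chasles_2 f 0); [lra|].
    apply (ex_RInt_Chasles_1 f 0 b' 1); [lra|apply Hf]. }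
  intros [Ha Ha'] [Hb Hb']. destruct (Rle_or_lt a b).
  - apply Hle; lra.
  - apply ex_RInt_swap, Hle; lra.
Qed.

Lemma Iphi_sub x y : I01 x -> I01 y -> Iphi f y - Iphi f x = RInt f x y.
Proof.
  intros Hx Hy. unfold Iphi.
  assert (H0 : I01 0) by (unfold I01; lra).
  pose proof (RInt_Chasles f 0 x y (ex_RInt_inF 0 x H0 Hx) (ex_RInt_inF x y Hx Hy)) as H.
  change (plus (RInt f 0 x) (RInt f x y)) with (RInt f 0 x + RInt f x y) in H.
  lra.
Qed.

Lemma RInt_ge_left x y : 0 <= x -> x <= y -> y <= 1 -> f x * (y - x) <= RInt f x y.
Proof.
  intros. assert (H2 : RInt (fun _ => f x) x y <= RInt f x y).
  { apply RInt_le; auto. apply ex_RInt_const. apply ex_RInt_inF; unfold I01; lra.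
    intros t Ht. apply Hf; lra. }
  rewrite RInt_const in H2. change (scal (y - x) (f x)) with ((y - x) * f x) in H2. lra.
Qed.

Lemma RInt_le_right x y : 0 <= x -> x <= y -> y <= 1 -> RInt f x y <= f y * (y - x).
Proof.
  intros. assert (H2 : RInt f x y <= RInt (fun _ => f y) x y).
  { apply RInt_le; auto. apply ex_RInt_inF; unfold I01; lra. apply ex_RInt_const.
    intros t Ht. apply Hf; lra. }
  rewrite RInt_const in H2. change (scal (y - x) (f y)) with ((y - x) * f y) in H2. lra.
Qed.

Lemma Iphi_0 : Iphi f 0 = - mean f.
Proof. unfold Iphi. rewrite RInt_point. change (zero : R) with 0. lra. Qed.

Lemma Iphi_1 : Iphi f 1 = 0.
Proof. unfold Iphi, mean. lra. Qed.

Lemma Iphi_subdiff x : I01 x -> subdiff (Iphi f) x (f x).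
Proof.
  intros Hx y Hy. pose proof (Iphi_sub x y Hx Hy). pose proof (Iphi_sub y x Hy Hx).
  destruct Hx, Hy. destruct (Rle_or_lt x y).
  - pose proof (RInt_ge_left x y ltac:(lra) ltac:(lra) ltac:(lra)). lra.
  - pose proof (RInt_le_right y x ltac:(lra) ltac:(lra) ltac:(lra)). lra.
Qed.

Lemma Iphi_convex : convex01 (Iphi f).
Proof.
  apply convex01_of_subdiff. intros x Hx. exists (f x). apply Iphi_subdiff. unfold I01; lra.
Qed.

Lemma Iphi_lipschitz x y : I01 x -> I01 y ->
  Rabs (Iphi f y - Iphi f x) <= (Rabs (f 0) + Rabs (f 1)) * Rabs (y - x).
Proof.
  assert (Hb : forall t, I01 t -> Rabs (f t) <= Rabs (f 0) + Rabs (f 1)).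
  { intros t Ht. destruct (inF_bounds t Ht). apply Rabs_le.
    pose proof (Rle_abs (f 0)); pose proof (Rle_abs (- f 0)); pose proof (Rle_abs (f 1)).
    rewrite Rabs_Ropp in *. pose proof (Rabs_pos (f 0)); pose proof (Rabs_pos (f 1)). lra. }
  assert (Hle : forall x y, I01 x -> I01 y -> x <= y ->
            Rabs (RInt f x y) <= (Rabs (f 0) + Rabs (f 1)) * (y - x)).
  { intros x' y' Hx Hy Hxy. rewrite Rmult_comm.
    apply abs_RInt_le_const; [lra|apply ex_RInt_inF; auto|].
    intros t Ht. apply Hb. destruct Hx, Hy. unfold I01; lra. }
  intros Hx Hy. rewrite Iphi_sub by auto. destruct (Rle_or_lt x y).
  - rewrite (Rabs_right (y - x)) by lra. apply Hle; auto.
  - rewrite <- (opp_RInt_swap f y x) by (apply ex_RInt_inF; auto).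
    change (Rabs (- RInt f y x) <= (Rabs (f 0) + Rabs (f 1)) * Rabs (y - x)).
    rewrite Rabs_Ropp, (Rabs_left (y - x)) by lra.
    replace (- (y - x)) with (x - y) by ring. apply Hle; auto; lra.
Qed.

Lemma Iphi_continuous x : 0 < x < 1 -> eps_continuous (Iphi f) x.
Proof.
  intros Hx e He. set (M := Rabs (f 0) + Rabs (f 1) + 1).
  assert (HM : 0 < M) by (unfold M; pose proof (Rabs_pos (f 0)); pose proof (Rabs_pos (f 1)); lra).
  set (r := Rmin (Rmin x (1 - x)) (e / M)).
  assert (Hr1 : r <= x) by (unfold r; eapply Rle_trans; [apply Rmin_l|apply Rmin_l]).
  assert (Hr2 : r <= 1 - x) by (unfold r; eapply Rle_trans; [apply Rmin_l|apply Rmin_r]).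
  assert (Hr3 : r <= e / M) by apply Rmin_r.
  exists r. split; [unfold r; repeat apply Rmin_pos; try apply Rdiv_lt_0_compat; lra|].
  intros y Hy. pose proof (proj1 (Rabs_lt_between _ _) Hy).
  eapply Rle_lt_trans; [apply Iphi_lipschitz; unfold I01; lra|].
  apply Rle_lt_trans with (M * Rabs (y - x)).
  { apply Rmult_le_compat_r; [apply Rabs_pos|unfold M; lra]. }
  apply Rlt_le_trans with (M * (e / M)); [apply Rmult_lt_compat_l; lra|].
  right; field; lra.
Qed.

Lemma Iphi_continuity_pt x : 0 < x < 1 -> continuity_pt (Iphi f) x.
Proof. intros Hx. apply continuity_pt_of_eps, Iphi_continuous, Hx. Qed.

Hypothesis Hfc : cont01 f.

Lemma RInt_near_const x z c e : 0 <= x -> x <= z -> z <= 1 ->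
  (forall t, x <= t <= z -> Rabs (f t - c) <= e) ->
  Rabs (RInt f x z - c * (z - x)) <= e * (z - x).
Proof.
  intros H1 H2 H3 H.
  assert (Hex : ex_RInt f x z) by (apply ex_RInt_inF; unfold I01; lra).
  pose proof (abs_RInt_le_const (fun t => f t - c) x z e H2
                (ex_RInt_minus f (fun _ => c) x z Hex (ex_RInt_const _ _ _)) H) as K.
  rewrite (RInt_minus f (fun _ => c)), RInt_const in K by (auto; apply ex_RInt_const).
  change (Rabs (RInt f x z - (z - x) * c) <= (z - x) * e) in K.
  rewrite Rmult_comm, (Rmult_comm e). exact K.
Qed.

Lemma Iphi_taylor y e : I01 y -> 0 < e ->
  exists del, 0 < del /\ forall z, I01 z -> Rabs (z - y) < del ->
    Rabs (Iphi f z - Iphi f y - f y * (z - y)) <= e * Rabs (z - y).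
Proof.
  intros Hy He. destruct (proj1 (filterlim_within_eps f I01 y (f y)) (Hfc y Hy) e He) as [d [Hd H]].
  exists d. split; auto. intros z Hz Hzy.
  assert (Hnear : forall t, I01 t -> Rabs (t - y) <= Rabs (z - y) -> Rabs (f t - f y) <= e).
  { intros t It Ht. left. apply H; [exact It|lra]. }
  rewrite Iphi_sub by auto. destruct Hy as [Hy0 Hy1], Hz as [Hz0 Hz1].
  destruct (Rle_or_lt y z).
  - rewrite (Rabs_right (z - y)) by lra. apply RInt_near_const; auto.
    intros t Ht. apply Hnear; [unfold I01; lra|rewrite !Rabs_right; lra].
  - rewrite <- (opp_RInt_swap f z y) by (apply ex_RInt_inF; unfold I01; lra).
    change (Rabs (- RInt f z y - f y * (z - y)) <= e * Rabs (z - y)).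
    replace (- RInt f z y - f y * (z - y)) with (- (RInt f z y - f y * (y - z))) by ring.
    rewrite Rabs_Ropp, (Rabs_left (z - y)) by lra. replace (- (z - y)) with (y - z) by ring.
    apply RInt_near_const; try lra.
    intros t Ht. apply Hnear; [unfold I01; lra|rewrite !Rabs_left1; lra].
Qed.

Lemma Iphi_deriv01 y : I01 y -> deriv01 (Iphi f) y (f y).
Proof.
  intros Hy. apply filterlim_within_eps. intros e He.
  destruct (Iphi_taylor y (e / 2) Hy ltac:(lra)) as [d [Hd H]].
  exists d. split; auto. intros z [Hz Hzy] Hzd.
  specialize (H z Hz Hzd).
  assert (Hpos : 0 < Rabs (z - y)) by (apply Rabs_pos_lt; lra).
  replace ((Iphi f z - Iphi f y) / (z - y) - f y)
    with ((Iphi f z - Iphi f y - f y * (z - y)) / (z - y)) by (field; lra).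
  rewrite Rabs_div by lra. apply Rlt_div_l; [exact Hpos|]. nra.
Qed.

End Primitive.

Lemma deriv01_chord_remainder (F : R -> R) y z dd : deriv01 F y dd -> I01 y -> I01 z -> z <> y ->
  forall e, 0 < e -> exists s, 0 < s <= 1 /\ F (y + s * (z - y)) - F y - dd * (s * (z - y)) <= e * s.
Proof.
  intros Hd Hy Hz Hzy e He.
  assert (Hzy0 : 0 < Rabs (z - y)) by (apply Rabs_pos_lt; lra).
  destruct (proj1 (filterlim_within_eps _ _ _ _) Hd (e / Rabs (z - y)))
    as [del [Hdel Hnear]]; [apply Rdiv_lt_0_compat; lra|].
  set (s := Rmin 1 (del / (2 * Rabs (z - y)))).
  assert (Hs : 0 < s <= 1).
  { split; [apply Rmin_pos; [lra|apply Rdiv_lt_0_compat; lra]|apply Rmin_l]. }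
  assert (Hsd : s * Rabs (z - y) < del).
  { apply Rle_lt_trans with (del / (2 * Rabs (z - y)) * Rabs (z - y)).
    - apply Rmult_le_compat_r; [lra|apply Rmin_r].
    - replace (del / (2 * Rabs (z - y)) * Rabs (z - y)) with (del / 2) by (field; lra). lra. }
  exists s. split; auto.
  set (x := y + s * (z - y)).
  assert (Hxy : Rabs (x - y) = s * Rabs (z - y)).
  { unfold x. replace (y + s * (z - y) - y) with (s * (z - y)) by ring.
    rewrite Rabs_mult, Rabs_right by lra. reflexivity. }
  assert (Hxy0 : x <> y) by (intro E; rewrite E, Rminus_diag, Rabs_R0 in Hxy; nra).
  assert (Hx : I01 x) by (destruct Hy, Hz; unfold I01, x; split; nra).
  specialize (Hnear x (conj Hx Hxy0) ltac:(lra)).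
  replace (s * (z - y)) with (x - y) by (unfold x; ring).
  replace (F x - F y - dd * (x - y)) with (((F x - F y) / (x - y) - dd) * (x - y)) by (field; lra).
  eapply Rle_trans; [apply Rle_abs|]. rewrite Rabs_mult, Hxy.
  apply Rle_trans with (e / Rabs (z - y) * (s * Rabs (z - y))).
  - apply Rmult_le_compat_r; [nra|lra].
  - right. field. lra.
Qed.

Lemma deriv01_support_le (F : R -> R) y dd be : deriv01 F y dd -> 0 <= y < 1 ->
  (forall z, I01 z -> F y + be * (z - y) <= F z) -> be <= dd.
Proof.
  intros Hd Hy Hsupp.
  assert (H : (be - dd) * (1 - y) <= 0).
  { apply Rle_plus_epsilon. intros e He. rewrite Rplus_0_l.
    destruct (deriv01_chord_remainder F y 1 dd Hd ltac:(unfold I01; lra) ltac:(unfold I01; lra)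
                ltac:(lra) e He) as [s [Hs Hrem]].
    pose proof (Hsupp (y + s * (1 - y)) ltac:(unfold I01; nra)).
    apply (Rmult_le_reg_l s); nra. }
  nra.
Qed.

Lemma deriv01_support_ge (F : R -> R) y dd be : deriv01 F y dd -> 0 < y <= 1 ->
  (forall z, I01 z -> F y + be * (z - y) <= F z) -> dd <= be.
Proof.
  intros Hd Hy Hsupp.
  assert (H : (dd - be) * y <= 0).
  { apply Rle_plus_epsilon. intros e He. rewrite Rplus_0_l.
    destruct (deriv01_chord_remainder F y 0 dd Hd ltac:(unfold I01; lra) ltac:(unfold I01; lra)
                ltac:(lra) e He) as [s [Hs Hrem]].
    pose proof (Hsupp (y + s * (0 - y)) ltac:(unfold I01; nra)).
    apply (Rmult_le_reg_l s); nra. }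
  nra.
Qed.

(** * Sufficiency *)

Lemma convex_comb_nonneg_zero lam a b : 0 < lam < 1 -> 0 <= a -> 0 <= b ->
  lam * a + (1 - lam) * b = 0 -> a = 0 /\ b = 0.
Proof. intros. split; nra. Qed.

Section Decomposition.
Variables f g h h1 h2 : R -> R.
Variable lam : R.
Hypothesis Hh1 : inIfg f g h1.
Hypothesis Hh2 : inIfg f g h2.
Hypothesis Hlam : 0 < lam < 1.
Hypothesis Hh : forall x, I01 x -> h x = lam * h1 x + (1 - lam) * h2 x.

Lemma decomposition_tight_lower x : I01 x -> h x = Iphi f x -> h1 x = h2 x.
Proof.
  intros Hx E. destruct Hh1 as [_ [_ [B1 _]]], Hh2 as [_ [_ [B2 _]]].
  specialize (B1 x Hx); specialize (B2 x Hx); specialize (Hh x Hx).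
  destruct (convex_comb_nonneg_zero lam (h1 x - h x) (h2 x - h x)); lra.
Qed.

Lemma decomposition_tight_upper x : I01 x -> h x = Iphi g x -> h1 x = h2 x.
Proof.
  intros Hx E. destruct Hh1 as [_ [_ [B1 _]]], Hh2 as [_ [_ [B2 _]]].
  specialize (B1 x Hx); specialize (B2 x Hx); specialize (Hh x Hx).
  destruct (convex_comb_nonneg_zero lam (h x - h1 x) (h x - h2 x)); lra.
Qed.

(* A convex combination of convex functions is affine only if both are. *)
Lemma decomposition_affine a b al be x : 0 <= a -> a < b -> b <= 1 ->
  (forall y, a <= y <= b -> h y = al + be * y) -> a <= x <= b ->
  (b - a) * (h1 x - h2 x) = (b - x) * (h1 a - h2 a) + (x - a) * (h1 b - h2 b).
Proof.
  intros Ha Hab Hb Haff Hx.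
  destruct (Req_dec x a) as [->|Hxa]; [ring|].
  destruct (Req_dec x b) as [->|Hxb]; [ring|].
  destruct Hh1 as [_ [C1 _]], Hh2 as [_ [C2 _]].
  pose proof (convex01_chord h1 C1 a x b Ha ltac:(lra) ltac:(lra) Hb).
  pose proof (convex01_chord h2 C2 a x b Ha ltac:(lra) ltac:(lra) Hb).
  assert (Aff : (b - a) * h x = (b - x) * h a + (x - a) * h b).
  { rewrite (Haff x), (Haff a), (Haff b) by lra. ring. }
  rewrite !Hh in Aff by (unfold I01; lra).
  destruct (convex_comb_nonneg_zero lam
    ((b - x) * h1 a + (x - a) * h1 b - (b - a) * h1 x)
    ((b - x) * h2 a + (x - a) * h2 b - (b - a) * h2 x)); lra.
Qed.

(* Both parts lie below [Iphi g] and meet it at [y], so neither can leave the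
   tangent at [y]: their difference is [o(|x - y|)] in both directions. *)
Lemma decomposition_tangent a b : 0 <= a -> a < b -> b <= 1 ->
  cond_a h (Iphi g) a b -> forall x, a <= x <= b -> h1 x = h2 x.
Proof.
  intros Ha Hab Hb [y [Hy [dd [Hd Hform]]]].
  assert (Haff : forall z, a <= z <= b -> h z = (Iphi g y - dd * y) + dd * z)
    by (intros z Hz; rewrite Hform; [ring|auto]).
  pose proof (fun x => decomposition_affine a b _ _ x Ha Hab Hb Haff) as Hchord.
  assert (Hya : a <= y <= b) by (destruct Hy; subst; lra).
  assert (Hy0 : h1 y = h2 y).
  { apply decomposition_tight_upper; [unfold I01; lra|]. rewrite Hform by auto. ring. }
  set (z := a + b - y).
  assert (Hz : (y = a /\ z = b) \/ (y = b /\ z = a)) by (unfold z; destruct Hy; [left|right]; lra).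
  assert (Hpar : forall s, 0 <= s <= 1 ->
            h1 (y + s * (z - y)) - h2 (y + s * (z - y)) = s * (h1 z - h2 z)).
  { intros s Hs. destruct Hz as [[-> ->]|[-> ->]].
    - apply (Rmult_eq_reg_l (b - a)); [|lra]. rewrite Hchord by nra. nra.
    - apply (Rmult_eq_reg_l (b - a)); [|lra]. rewrite Hchord by nra. nra. }
  assert (Hsmall : forall e, 0 < e -> (1 - lam) * (h1 z - h2 z) <= e /\ - lam * (h1 z - h2 z) <= e).
  { intros e He.
    destruct (deriv01_chord_remainder _ y z dd Hd ltac:(unfold I01; lra) ltac:(unfold I01; lra)
                ltac:(destruct Hz; lra) e He) as [s [Hs Hrem]].
    set (x := y + s * (z - y)) in *.
    assert (Hx : a <= x <= b) by (unfold x; destruct Hz as [[-> ->]|[-> ->]]; nra).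
    destruct Hh1 as [_ [_ [B1 _]]], Hh2 as [_ [_ [B2 _]]].
    specialize (B1 x ltac:(unfold I01; lra)); specialize (B2 x ltac:(unfold I01; lra)).
    specialize (Hh x ltac:(unfold I01; lra)). specialize (Hpar s ltac:(lra)).
    rewrite (Hform x Hx) in Hh. fold x in Hpar.
    replace (x - y) with (s * (z - y)) in Hh by (unfold x; ring).
    split; apply (Rmult_le_reg_l s); nra. }
  assert (Hz0 : h1 z = h2 z).
  { assert ((1 - lam) * (h1 z - h2 z) <= 0)
      by (apply Rle_plus_epsilon; intros e He; rewrite Rplus_0_l; apply Hsmall, He).
    assert (- lam * (h1 z - h2 z) <= 0)
      by (apply Rle_plus_epsilon; intros e He; rewrite Rplus_0_l; apply Hsmall, He).
    nra. }
  intros x Hx. apply Rminus_diag_uniq, (Rmult_eq_reg_l (b - a)); [|lra].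
  rewrite Hchord by exact Hx. destruct Hz as [[Ey Ez]|[Ey Ez]]; rewrite Ey in Hy0; rewrite Ez in Hz0; rewrite Hy0, Hz0; ring.
Qed.

End Decomposition.

Lemma extreme_of_interval_structure f g h :
  inIfg f g h -> interval_structure f g h -> extreme_Ifg f g h.
Proof.
  intros Hh [N [a [b [Hab [_ [Hout Hin]]]]]]. split; auto.
  intros h1 h2 lam Hh1 Hh2 Hl Hcomb x Hx.
  assert (Hpiece : forall n, N n -> forall y, a n <= y <= b n -> h1 y = h2 y).
  { intros n Hn. destruct (Hab n Hn) as [Ha0 [Hab' Hb1]].
    destruct (Hin n Hn) as [[al [be Haff]] [_ [Hc|Hc]]].
    - apply (decomposition_tangent f g h h1 h2 lam); auto.
    - assert (Hends : forall e, (e = a n \/ e = b n) -> h1 e = h2 e).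
      { intros e He. destruct (Hc e He) as [Hf|[m [Hm [Hsh Hcm]]]].
        - apply (decomposition_tight_lower f g h h1 h2 lam); auto.
          unfold I01; destruct He; subst; lra.
        - destruct (Hab m Hm) as [Ha0' [Hab'' Hb1']].
          apply (decomposition_tangent f g h h1 h2 lam Hh1 Hh2 Hl Hcomb (a m) (b m)); auto.
          destruct Hsh as [[E1 E2]|[E1 E2]]; subst; lra. }
      intros y Hy. apply Rminus_diag_uniq, (Rmult_eq_reg_l (b n - a n)); [|lra].
      rewrite (decomposition_affine f g h h1 h2 lam Hh1 Hh2 Hl Hcomb (a n) (b n) al be y)
        by auto.
      rewrite (Hends (a n)), (Hends (b n)) by auto. ring. }
  destruct (classic (exists n, N n /\ a n <= x <= b n)) as [[n [Hn Hxn]]|Hno].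
  - exact (Hpiece n Hn x Hxn).
  - destruct (Hout x Hx (fun n Hn Hxn => Hno (ex_intro _ n (conj Hn Hxn)))) as [E|E].
    + exact (decomposition_tight_lower f g h h1 h2 lam Hh1 Hh2 Hl Hcomb x Hx E).
    + exact (decomposition_tight_upper f g h h1 h2 lam Hh1 Hh2 Hl Hcomb x Hx E).
Qed.

(** * Perturbations by kinks *)

Section Sandwich.
Variables f g : R -> R.
Hypothesis Hf : inF f.
Hypothesis Hg : inF g.
Hypothesis Hmaj : majorizes f g.

Lemma Iphi_ends_majorizes x : x = 0 \/ x = 1 -> Iphi f x = Iphi g x.
Proof.
  intros [->| ->].
  - rewrite (Iphi_0 f), (Iphi_0 g). destruct Hmaj as [-> _]. reflexivity.
  - rewrite (Iphi_1 f), (Iphi_1 g). reflexivity.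
Qed.

Lemma sandwich_cont_ends (F : R -> R) x : (forall y, I01 y -> Iphi f y <= F y <= Iphi g y) ->
  x = 0 \/ x = 1 -> filterlim F (within I01 (locally x)) (locally (F x)).
Proof.
  intros HB Hx. apply filterlim_within_eps. intros e He.
  set (M := Rabs (f 0) + Rabs (f 1) + (Rabs (g 0) + Rabs (g 1)) + 1).
  pose proof (Rabs_pos (f 0)); pose proof (Rabs_pos (f 1)).
  pose proof (Rabs_pos (g 0)); pose proof (Rabs_pos (g 1)).
  assert (HM : 0 < M) by (unfold M; lra).
  exists (e / M). split; [apply Rdiv_lt_0_compat; lra|].
  intros y Hy Hyx.
  assert (Hx01 : I01 x) by (unfold I01; destruct Hx; lra).
  pose proof (Iphi_ends_majorizes x Hx). pose proof (HB x Hx01). pose proof (HB y Hy).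
  assert (Hm : M * Rabs (y - x) < e).
  { apply (Rmult_lt_compat_l M) in Hyx; auto. replace (M * (e / M)) with e in Hyx by (field; lra). auto. }
  assert (Lf : Rabs (Iphi f y - Iphi f x) <= M * Rabs (y - x)).
  { eapply Rle_trans; [apply (Iphi_lipschitz f Hf x y Hx01 Hy)|].
    apply Rmult_le_compat_r; [apply Rabs_pos|unfold M; lra]. }
  assert (Lg : Rabs (Iphi g y - Iphi g x) <= M * Rabs (y - x)).
  { eapply Rle_trans; [apply (Iphi_lipschitz g Hg x y Hx01 Hy)|].
    apply Rmult_le_compat_r; [apply Rabs_pos|unfold M; lra]. }
  apply Rabs_le_between in Lf. apply Rabs_le_between in Lg. apply Rabs_lt_between. lra.
Qed.

(* The slope condition in [inIfg] is automatic: [F] lies above [Iphi f] and agrees with it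
   at [0] and [1], so a supporting slope of [F] is squeezed between the supporting slopes
   [f 0] and [f 1] of [Iphi f] there. *)
Lemma inIfg_of_convex (F : R -> R) : convex01 F ->
  (forall y, I01 y -> Iphi f y <= F y <= Iphi g y) -> inIfg f g F.
Proof.
  intros HC HB. split; [|split; [auto|split; [auto|]]].
  - intros x Hx. destruct (Req_dec x 0) as [->|H0]; [apply sandwich_cont_ends; auto|].
    destruct (Req_dec x 1) as [->|H1]; [apply sandwich_cont_ends; auto|].
    apply convex01_cont_within; auto. unfold I01 in Hx; lra.
  - intros x s Hx Hs.
    assert (I0 : I01 0) by (unfold I01; lra). assert (I1 : I01 1) by (unfold I01; lra).
    assert (Ix : I01 x) by (unfold I01; lra).
    pose proof (Hs 0 I0). pose proof (Hs 1 I1).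
    pose proof (HB 0 I0). pose proof (HB 1 I1). pose proof (HB x Ix).
    pose proof (Iphi_ends_majorizes 0 (or_introl eq_refl)).
    pose proof (Iphi_ends_majorizes 1 (or_intror eq_refl)).
    pose proof (Iphi_subdiff f Hf 0 I0 x Ix). pose proof (Iphi_subdiff f Hf 1 I1 x Ix).
    split; [apply (Rmult_le_reg_r x)|apply (Rmult_le_reg_r (1 - x))]; lra.
Qed.

End Sandwich.

Section Splice.
Variable h : R -> R.
Hypothesis Hc : convex01 h.

Definition tline (t m y : R) := h t + m * (y - t).

Definition splice (t m t' m' y : R) :=
  if Rle_dec y t then tline t m y else if Rle_dec y t' then h y else tline t' m' y.
Definition splice_left (t m y : R) := if Rle_dec y t then h y else tline t m y.
Definition splice_right (t m y : R) := if Rle_dec y t then tline t m y else h y.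

Lemma splice_cases t m t' m' y :
  splice t m t' m' y = tline t m y \/ splice t m t' m' y = h y \/ splice t m t' m' y = tline t' m' y.
Proof. unfold splice. destruct (Rle_dec y t); auto. destruct (Rle_dec y t'); auto. Qed.

Lemma splice_convex t m t' m' : I01 t -> I01 t' -> t <= t' -> m <= m' ->
  subdiff h t m -> subdiff h t' m' -> convex01 (splice t m t' m').
Proof.
  intros Ht Ht' Htt Hmm Hm Hm'. apply convex01_of_subdiff. intros x Hx.
  assert (Ix : I01 x) by (unfold I01; lra).
  assert (Lt : forall y, I01 y -> tline t m y <= splice t m t' m' y).
  { intros y Hy. unfold splice, tline. destruct (Rle_dec y t); [lra|].
    destruct (Rle_dec y t'); [apply Hm; auto|]. pose proof (Hm t' Ht'). nra. }
  assert (Lt' : forall y, I01 y -> tline t' m' y <= splice t m t' m' y).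
  { intros y Hy. unfold splice, tline. destruct (Rle_dec y t); [pose proof (Hm' t Ht); nra|].
    destruct (Rle_dec y t'); [apply Hm'; auto|lra]. }
  destruct (Rle_dec x t).
  - exists m. intros y Hy. specialize (Lt y Hy). unfold splice at 1.
    destruct (Rle_dec x t); [|contradiction]. unfold tline in *. lra.
  - destruct (Rlt_dec x t').
    + destruct (convex01_subdiff_exists h Hc x Hx) as [s Hs]. exists s.
      assert (Hms : m <= s) by (apply (subdiff_mono h x t); auto; lra).
      assert (Hsm : s <= m') by (apply (subdiff_mono h t' x); auto; lra).
      intros y Hy. unfold splice at 1. destruct (Rle_dec x t); [contradiction|].
      destruct (Rle_dec x t'); [|lra].
      unfold splice, tline. destruct (Rle_dec y t); [pose proof (Hs t Ht); nra|].
      destruct (Rle_dec y t'); [apply Hs; auto|]. pose proof (Hs t' Ht'). nra.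
    + exists m'. intros y Hy. specialize (Lt' y Hy).
      assert (E : splice t m t' m' x = tline t' m' x).
      { unfold splice. destruct (Rle_dec x t); [contradiction|].
        destruct (Rle_dec x t'); [|reflexivity]. replace x with t' by lra. unfold tline. ring. }
      rewrite E. unfold tline in *. lra.
Qed.

Lemma splice_left_convex t m : I01 t -> subdiff h t m -> convex01 (splice_left t m).
Proof.
  intros Ht Hm. apply convex01_of_subdiff. intros x Hx.
  assert (Ix : I01 x) by (unfold I01; lra).
  destruct (Rlt_dec x t).
  - destruct (convex01_subdiff_exists h Hc x Hx) as [s Hs]. exists s.
    assert (Hsm : s <= m) by (apply (subdiff_mono h t x); auto).
    intros y Hy. unfold splice_left at 1. destruct (Rle_dec x t); [|lra].
    unfold splice_left, tline. destruct (Rle_dec y t); [apply Hs; auto|].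
    pose proof (Hs t Ht). nra.
  - exists m. intros y Hy.
    assert (E : splice_left t m x = tline t m x).
    { unfold splice_left. destruct (Rle_dec x t); [|reflexivity].
      replace x with t by lra. unfold tline. ring. }
    rewrite E. unfold splice_left, tline. destruct (Rle_dec y t); [pose proof (Hm y Hy)|]; lra.
Qed.

Lemma splice_right_convex t m : I01 t -> subdiff h t m -> convex01 (splice_right t m).
Proof.
  intros Ht Hm. apply convex01_of_subdiff. intros x Hx.
  assert (Ix : I01 x) by (unfold I01; lra).
  destruct (Rle_dec x t).
  - exists m. intros y Hy. unfold splice_right at 1. destruct (Rle_dec x t); [|contradiction].
    unfold splice_right, tline. destruct (Rle_dec y t); [lra|]. pose proof (Hm y Hy). lra.
  - destruct (convex01_subdiff_exists h Hc x Hx) as [s Hs]. exists s.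
    assert (Hms : m <= s) by (apply (subdiff_mono h x t); auto; lra).
    intros y Hy. unfold splice_right at 1. destruct (Rle_dec x t); [contradiction|].
    unfold splice_right, tline. destruct (Rle_dec y t); [pose proof (Hs t Ht); nra|apply Hs; auto].
Qed.

Lemma tline_abs_le t m y : I01 t -> I01 y -> Rabs (tline t m y) <= Rabs (h t) + Rabs m.
Proof.
  intros [It It'] [Iy Iy']. unfold tline. eapply Rle_trans; [apply Rabs_triang|].
  rewrite Rabs_mult. assert (Rabs (y - t) <= 1) by (apply Rabs_le; lra).
  pose proof (Rabs_pos m). nra.
Qed.

Lemma h_abs_le_between t t' m y : I01 t -> I01 t' -> t <= y <= t' -> subdiff h t m ->
  Rabs (h y) <= Rabs (h t) + Rabs (h t') + Rabs m.
Proof.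
  intros It It' Hy Hm. assert (Iy : I01 y) by (destruct It, It'; unfold I01; lra).
  pose proof (Hm y Iy). pose proof (tline_abs_le t m y It Iy) as L.
  unfold tline in L. apply Rabs_le_between in L.
  pose proof (Rle_abs (h t)); pose proof (Rle_abs (h t')).
  pose proof (Rabs_pos m); pose proof (Rabs_pos (h t')).
  apply Rabs_le. split; [lra|].
  destruct (Req_dec y t) as [->|Hyt]; [lra|]. destruct (Req_dec y t') as [->|Hyt']; [lra|].
  pose proof (convex01_chord h Hc t y t' ltac:(destruct It; lra) ltac:(lra) ltac:(lra)
                ltac:(destruct It'; lra)).
  apply (Rmult_le_reg_l (t' - t)); [lra|]. nra.
Qed.

End Splice.

(* Three kinks of [h] at which the supporting lines [l1 .. l4] change slope can be
   weighted ([a1 a2 a3]) so that the line differences cancel; the weighted sum of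
   the kinks is a perturbation [bump] of [h] that vanishes outside [[t1, t4]] and
   keeps [h + eps * bump] convex for small [eps] of either sign. *)
Section Bump.
Variable h : R -> R.
Hypothesis Hc : convex01 h.
Variables t1 t2 t3 t4 m1 m2 m3 m4 a1 a2 a3 : R.
Hypotheses (I1 : I01 t1) (I2 : I01 t2) (I3 : I01 t3) (I4 : I01 t4).
Hypotheses (T12 : t1 <= t2) (T23 : t2 <= t3) (T34 : t3 <= t4).
Hypotheses (M12 : m1 <= m2) (M23 : m2 <= m3) (M34 : m3 <= m4).
Hypotheses (S1 : subdiff h t1 m1) (S2 : subdiff h t2 m2) (S3 : subdiff h t3 m3) (S4 : subdiff h t4 m4).
Hypothesis Hcancel : forall y, a1 * (tline h t2 m2 y - tline h t1 m1 y)
  + a2 * (tline h t3 m3 y - tline h t2 m2 y) + a3 * (tline h t4 m4 y - tline h t3 m3 y) = 0.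

Let K1 := splice h t1 m1 t2 m2.
Let K2 := splice h t2 m2 t3 m3.
Let K3 := splice h t3 m3 t4 m4.
Let l1 := tline h t1 m1. Let l2 := tline h t2 m2. Let l3 := tline h t3 m3. Let l4 := tline h t4 m4.

Definition bump y := a1 * (K1 y - l1 y) + a2 * (K2 y - l2 y) + a3 * (K3 y - l3 y).

Lemma splice_decomp y : h y = splice_left h t1 m1 y + K1 y + K2 y + K3 y
  + splice_right h t4 m4 y - (l1 y + l2 y + l3 y + l4 y).
Proof.
  unfold K1, K2, K3, l1, l2, l3, l4, splice_left, splice_right, splice.
  destruct (Rle_dec y t1); destruct (Rle_dec y t2); destruct (Rle_dec y t3);
    destruct (Rle_dec y t4); lra.
Qed.

Lemma bump_perturb_convex eps : 0 <= 1 + eps * a1 -> 0 <= 1 + eps * a2 -> 0 <= 1 + eps * a3 ->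
  convex01 (fun y => h y + eps * bump y).
Proof.
  intros P1 P2 P3.
  set (A := - ((h t1 - m1 * t1) + (h t2 - m2 * t2) + (h t3 - m3 * t3) + (h t4 - m4 * t4))
             - eps * (a1 * (h t1 - m1 * t1) + a2 * (h t2 - m2 * t2) + a3 * (h t3 - m3 * t3))).
  set (B := - (m1 + m2 + m3 + m4) - eps * (a1 * m1 + a2 * m2 + a3 * m3)).
  apply (convex01_ext _ (fun y => (splice_left h t1 m1 y + ((1 + eps * a1) * K1 y
    + ((1 + eps * a2) * K2 y + ((1 + eps * a3) * K3 y + splice_right h t4 m4 y)))) + (A + B * y))).
  - intros y. rewrite (splice_decomp y) at 1. unfold bump, A, B, l1, l2, l3, l4, tline. ring.
  - apply convex01_add_affine, convex01_add; [apply splice_left_convex; auto|].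
    apply convex01_add; [apply convex01_scale; auto; apply splice_convex; auto|].
    apply convex01_add; [apply convex01_scale; auto; apply splice_convex; auto|].
    apply convex01_add; [apply convex01_scale; auto; apply splice_convex; auto|].
    apply splice_right_convex; auto.
Qed.

Lemma bump_left y : y <= t1 -> bump y = 0.
Proof.
  intros Hy. unfold bump, K1, K2, K3, splice.
  destruct (Rle_dec y t1); [|lra]. destruct (Rle_dec y t2); [|lra]. destruct (Rle_dec y t3); [|lra].
  unfold l1, l2, l3. ring.
Qed.

Lemma bump_right y : t4 < y -> bump y = 0.
Proof.
  intros Hy. unfold bump, K1, K2, K3, splice.
  destruct (Rle_dec y t1); [lra|]. destruct (Rle_dec y t2); [lra|]. destruct (Rle_dec y t3); [lra|].
  destruct (Rle_dec y t4); [lra|]. pose proof (Hcancel y). unfold l1, l2, l3. lra.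
Qed.

Lemma bump_12 y : t1 <= y <= t2 -> bump y = a1 * (h y - l1 y).
Proof.
  intros Hy. unfold bump, K1, K2, K3, splice.
  destruct (Rle_dec y t2); [|lra]. destruct (Rle_dec y t3); [|lra].
  destruct (Rle_dec y t1).
  - replace y with t1 by lra. unfold l1, l2, l3, tline. ring.
  - unfold l2, l3. ring.
Qed.

Lemma bump_34 y : t3 < y <= t4 -> bump y = a3 * (h y - l4 y).
Proof.
  intros Hy. unfold bump, K1, K2, K3, splice.
  destruct (Rle_dec y t1); [lra|]. destruct (Rle_dec y t2); [lra|]. destruct (Rle_dec y t3); [lra|].
  destruct (Rle_dec y t4); [|lra]. pose proof (Hcancel y). unfold l1, l2, l3, l4 in *. lra.
Qed.

Lemma bump_bounded : exists B, 0 <= B /\ forall y, I01 y -> Rabs (bump y) <= B.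
Proof.
  set (C := Rabs (h t1) + Rabs (h t2) + Rabs (h t3) + Rabs (h t4)
            + Rabs m1 + Rabs m2 + Rabs m3 + Rabs m4).
  pose proof (Rabs_pos (h t1)); pose proof (Rabs_pos (h t2)); pose proof (Rabs_pos (h t3));
    pose proof (Rabs_pos (h t4)); pose proof (Rabs_pos m1); pose proof (Rabs_pos m2);
    pose proof (Rabs_pos m3); pose proof (Rabs_pos m4).
  pose proof (Rabs_pos a1); pose proof (Rabs_pos a2); pose proof (Rabs_pos a3).
  exists (2 * C * (Rabs a1 + Rabs a2 + Rabs a3)). split; [unfold C; nra|].
  intros y Hy.
  destruct (Rlt_or_le y t1) as [Hlt|Hge]; [rewrite bump_left, Rabs_R0 by lra; unfold C; nra|].
  destruct (Rlt_or_le t4 y) as [Hgt|Hle]; [rewrite bump_right, Rabs_R0 by lra; unfold C; nra|].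
  pose proof (h_abs_le_between h Hc t1 t4 m1 y I1 I4 ltac:(lra) S1).
  pose proof (tline_abs_le h t1 m1 y I1 Hy). pose proof (tline_abs_le h t2 m2 y I2 Hy).
  pose proof (tline_abs_le h t3 m3 y I3 Hy). pose proof (tline_abs_le h t4 m4 y I4 Hy).
  assert (Hterm : forall t m t' m', (t = t1 /\ m = m1 /\ t' = t2 /\ m' = m2) \/
            (t = t2 /\ m = m2 /\ t' = t3 /\ m' = m3) \/ (t = t3 /\ m = m3 /\ t' = t4 /\ m' = m4) ->
            Rabs (splice h t m t' m' y - tline h t m y) <= 2 * C).
  { intros t m t' m' Htm. unfold Rminus. eapply Rle_trans; [apply Rabs_triang|].
    rewrite Rabs_Ropp. unfold C.
    destruct (splice_cases h t m t' m' y) as [E|[E|E]]; rewrite E;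
      destruct Htm as [[-> [-> [-> ->]]]|[[-> [-> [-> ->]]]|[-> [-> [-> ->]]]]]; lra. }
  pose proof (Hterm t1 m1 t2 m2 ltac:(auto 8)).
  pose proof (Hterm t2 m2 t3 m3 ltac:(auto 8)).
  pose proof (Hterm t3 m3 t4 m4 ltac:(auto 8)).
  unfold bump, K1, K2, K3, l1, l2, l3.
  eapply Rle_trans; [apply Rabs_triang|].
  eapply Rle_trans; [apply Rplus_le_compat_r, Rabs_triang|].
  rewrite !Rabs_mult. nra.
Qed.

End Bump.

Lemma three_kinks_cancel (s1 s2 s3 z1 z2 z3 y : R) : s1 <> 0 -> s2 <> 0 -> s3 <> 0 ->
  (z3 - z2) / s1 * (s1 * (y - z1)) + (z1 - z3) / s2 * (s2 * (y - z2))
  + (z2 - z1) / s3 * (s3 * (y - z3)) = 0.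
Proof. intros. field. auto. Qed.

Section Kinks.
Variable h : R -> R.
Hypothesis Hc : convex01 h.

Definition chord_affine u v :=
  forall w, u <= w <= v -> (v - u) * h w = (v - w) * h u + (w - u) * h v.

Definition affine_on c d al be := forall z, c <= z <= d -> h z = al + be * z.

Lemma affine_on_of_chord u v : u < v -> chord_affine u v ->
  affine_on u v (h u - (h v - h u) / (v - u) * u) ((h v - h u) / (v - u)).
Proof.
  intros Huv HA z Hz. specialize (HA z Hz).
  apply (Rmult_eq_reg_l (v - u)); [|lra]. rewrite HA. field. lra.
Qed.

Lemma not_chord_affine_witness u v : 0 <= u -> u < v -> v <= 1 -> ~ chord_affine u v ->
  exists w, u < w < v /\ (v - u) * h w < (v - w) * h u + (w - u) * h v.
Proof.
  intros Hu Huv Hv HN. apply NNPP. intros Hno. apply HN. intros w Hw.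
  destruct (Req_dec w u) as [->|Hwu]; [ring|]. destruct (Req_dec w v) as [->|Hwv]; [ring|].
  destruct (Rle_lt_or_eq_dec _ _ (convex01_chord h Hc u w v Hu ltac:(lra) ltac:(lra) Hv))
    as [Hl|]; [|auto].
  exfalso. apply Hno. exists w. split; [lra|auto].
Qed.

Lemma tline_gap_pos u v m : 0 <= u -> u < v -> v <= 1 -> subdiff h u m -> ~ chord_affine u v ->
  0 < h v - tline h u m v.
Proof.
  intros H0 H1 H2 Hm HN. destruct (not_chord_affine_witness u v H0 H1 H2 HN) as [w [Hw Hlt]].
  pose proof (Hm w ltac:(unfold I01; lra)). pose proof (Hm v ltac:(unfold I01; lra)).
  unfold tline. apply Rnot_le_lt. intros Hle.
  assert (Ev : h v = h u + m * (v - u)) by lra. rewrite Ev in Hlt. nra.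
Qed.

Lemma subdiff_lt_of_gap u v m m' : I01 u -> u < v -> subdiff h v m' ->
  0 < h v - tline h u m v -> m < m'.
Proof. intros Iu Huv Sv Hgap. pose proof (Sv u Iu). unfold tline in Hgap. nra. Qed.

Lemma tline_cross u v mu mv : I01 u -> subdiff h v mv -> mu < mv -> 0 < h v - tline h u mu v ->
  exists z, u <= z < v /\ forall y, tline h v mv y - tline h u mu y = (mv - mu) * (y - z).
Proof.
  intros Iu Sv Hm Hgap. pose proof (Sv u Iu).
  exists (v - (h v - tline h u mu v) / (mv - mu)). split; [split|].
  - apply (Rmult_le_reg_l (mv - mu)); [lra|]. unfold tline in *.
    replace ((mv - mu) * (v - (h v - (h u + mu * (v - u))) / (mv - mu)))
      with ((mv - mu) * v - (h v - (h u + mu * (v - u)))) by (field; lra). nra.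
  - assert (0 < (h v - tline h u mu v) / (mv - mu)) by (apply Rdiv_lt_0_compat; lra). lra.
  - intros y. unfold tline. field. lra.
Qed.

(* Consecutive supporting lines cross at [z1 < z2 < z3]; weights proportional to the
   opposite gaps [z3 - z2], [z1 - z3], [z2 - z1] make their differences cancel. *)
Lemma kinks_cancel t1 t2 t3 t4 m1 m2 m3 m4 : I01 t1 -> I01 t2 -> I01 t3 ->
  t1 < t2 -> t2 < t3 -> t3 < t4 -> subdiff h t2 m2 -> subdiff h t3 m3 -> subdiff h t4 m4 ->
  0 < h t2 - tline h t1 m1 t2 -> 0 < h t3 - tline h t2 m2 t3 -> 0 < h t4 - tline h t3 m3 t4 ->
  m1 < m2 /\ m2 < m3 /\ m3 < m4 /\ exists a1 a2 a3, a1 <> 0 /\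
    forall y, a1 * (tline h t2 m2 y - tline h t1 m1 y) + a2 * (tline h t3 m3 y - tline h t2 m2 y)
              + a3 * (tline h t4 m4 y - tline h t3 m3 y) = 0.
Proof.
  intros I1 I2 I3 P12 P23 P34 S2 S3 S4 E1 E2 E3.
  pose proof (subdiff_lt_of_gap t1 t2 m1 m2 I1 P12 S2 E1) as M12.
  pose proof (subdiff_lt_of_gap t2 t3 m2 m3 I2 P23 S3 E2) as M23.
  pose proof (subdiff_lt_of_gap t3 t4 m3 m4 I3 P34 S4 E3) as M34.
  destruct (tline_cross t1 t2 m1 m2 I1 S2 M12 E1) as [z1 [Z1 D1]].
  destruct (tline_cross t2 t3 m2 m3 I2 S3 M23 E2) as [z2 [Z2 D2]].
  destruct (tline_cross t3 t4 m3 m4 I3 S4 M34 E3) as [z3 [Z3 D3]].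
  split; [auto|split; [auto|split; [auto|]]].
  exists ((z3 - z2) / (m2 - m1)), ((z1 - z3) / (m3 - m2)), ((z2 - z1) / (m4 - m3)). split.
  - apply Rmult_integral_contrapositive_currified; [lra|apply Rinv_neq_0_compat; lra].
  - intros y. rewrite D1, D2, D3. apply three_kinks_cancel; lra.
Qed.

Lemma affine_on_support c d al be : 0 <= c -> c < d -> d <= 1 -> affine_on c d al be ->
  forall y, I01 y -> al + be * y <= h y.
Proof.
  intros Hc0 Hcd Hd HL y [Hy0 Hy1].
  destruct (Rle_or_lt y c) as [Hyc|Hyc].
  - destruct (Req_dec y c) as [->|Hne]; [rewrite HL; lra|].
    pose proof (convex01_chord h Hc y c d Hy0 ltac:(lra) Hcd Hd) as H.
    rewrite (HL c), (HL d) in H by lra. nra.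
  - destruct (Rle_or_lt y d) as [Hyd|Hyd]; [rewrite HL; lra|].
    pose proof (convex01_chord h Hc c d y Hc0 Hcd Hyd Hy1) as H.
    rewrite (HL c), (HL d) in H by lra. nra.
Qed.

Lemma affine_on_subdiff c d al be x : 0 <= c -> c < d -> d <= 1 -> affine_on c d al be ->
  c <= x <= d -> subdiff h x be.
Proof.
  intros Hc0 Hcd Hd HL Hx y Hy. rewrite (HL x Hx).
  pose proof (affine_on_support c d al be Hc0 Hcd Hd HL y Hy). lra.
Qed.

Lemma tent_bump u k w alL beL alR beR mu mw : 0 <= u -> u < k -> k < w -> w <= 1 ->
  affine_on u k alL beL -> affine_on k w alR beR -> mu < beL -> beL < beR -> beR < mw ->
  exists a1 a2 a3,
    (forall y, u <= y <= k -> bump h u k k w mu beL beR mw a1 a2 a3 y = (w - k) * (y - u)) /\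
    (forall y, k < y <= w -> bump h u k k w mu beL beR mw a1 a2 a3 y = (k - u) * (w - y)) /\
    (forall y, w < y -> bump h u k k w mu beL beR mw a1 a2 a3 y = 0).
Proof.
  intros Hu Huk Hkw Hw HLL HLR Hmu Hbe Hmw.
  set (a1 := (w - k) / (beL - mu)). set (a3 := (k - u) / (mw - beR)).
  assert (Hcancel : forall y, a1 * (tline h k beL y - tline h u mu y)
     + (u - w) / (beR - beL) * (tline h k beR y - tline h k beL y)
     + a3 * (tline h w mw y - tline h k beR y) = 0).
  { intros y.
    replace (tline h k beL y - tline h u mu y) with ((beL - mu) * (y - u))
      by (unfold tline; rewrite (HLL k), (HLL u) by lra; ring).
    replace (tline h k beR y - tline h k beL y) with ((beR - beL) * (y - k)) by (unfold tline; ring).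
    replace (tline h w mw y - tline h k beR y) with ((mw - beR) * (y - w))
      by (unfold tline; rewrite (HLR k), (HLR w) by lra; ring).
    apply three_kinks_cancel; lra. }
  exists a1, ((u - w) / (beR - beL)), a3. split; [|split].
  - intros y Hy. rewrite bump_12 by lra. unfold tline.
    rewrite (HLL y), (HLL u) by lra. unfold a1. field. lra.
  - intros y Hy. rewrite bump_34 by (auto; lra). unfold tline.
    rewrite (HLR y), (HLR w) by lra. unfold a3. field. lra.
  - intros y Hy. apply bump_right; auto; lra.
Qed.

Lemma chord_affine_shrink_left x v : 0 < x -> x < v -> v < 1 -> ~ chord_affine x v ->
  exists u, x < u < v /\ ~ chord_affine u v.
Proof.
  intros H0 Hxv Hv HN. destruct (not_chord_affine_witness x v ltac:(lra) Hxv ltac:(lra) HN)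
    as [w [Hw Hlt]].
  (* the chord defect of [h] at [w] on [[u, v]], as a function of [u] near [x] *)
  destruct (pos_near_of_continuous h x (v - w) (w * h v - v * h w) (h w - h v)
              (convex01_continuous h Hc x ltac:(lra)) ltac:(lra) ltac:(nra)) as [d [Hd Hnear]].
  pose proof (Rmin_l (d / 2) ((w - x) / 2)). pose proof (Rmin_r (d / 2) ((w - x) / 2)).
  set (r := Rmin (d / 2) ((w - x) / 2)) in *.
  assert (Hr : 0 < r) by (apply Rmin_pos; lra).
  exists (x + r). split; [lra|]. intros HA.
  specialize (Hnear (x + r) ltac:(rewrite Rabs_right; lra)). specialize (HA w ltac:(lra)). nra.
Qed.

Lemma chord_affine_shrink_right u x : 0 < u -> u < x -> x < 1 -> ~ chord_affine u x ->
  exists v, u < v < x /\ ~ chord_affine u v.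
Proof.
  intros H0 Hux Hx HN. destruct (not_chord_affine_witness u x ltac:(lra) Hux ltac:(lra) HN)
    as [w [Hw Hlt]].
  (* the chord defect of [h] at [w] on [[u, v]], as a function of [v] near [x] *)
  destruct (pos_near_of_continuous h x (w - u) (u * h w - w * h u) (h u - h w)
              (convex01_continuous h Hc x ltac:(lra)) ltac:(lra) ltac:(nra)) as [d [Hd Hnear]].
  pose proof (Rmin_l (d / 2) ((x - w) / 2)). pose proof (Rmin_r (d / 2) ((x - w) / 2)).
  set (r := Rmin (d / 2) ((x - w) / 2)) in *.
  assert (Hr : 0 < r) by (apply Rmin_pos; lra).
  exists (x - r). split; [lra|]. intros HA.
  specialize (Hnear (x - r) ltac:(rewrite Rabs_left1; lra)). specialize (HA w ltac:(lra)). nra.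
Qed.

End Kinks.

(** * Necessity *)

Definition qenum (n : nat) : R :=
  INR (fst (Cantor.of_nat n)) / INR (S (snd (Cantor.of_nat n))).

Lemma qenum_dense u v : 0 <= u -> u < v -> exists n, u < qenum n < v.
Proof.
  intros Hu Huv.
  assert (INR_up : forall x, 0 <= x -> x < INR (Z.to_nat (up x)) /\ INR (Z.to_nat (up x)) <= x + 1).
  { intros x Hx. destruct (archimed x) as [A1 A2].
    assert (Hz : (0 <= up x)%Z) by (apply le_IZR; lra).
    rewrite INR_IZR_INZ, Z2Nat.id by exact Hz. lra. }
  set (j := Z.to_nat (up (1 / (v - u)))).
  assert (Hj : 1 / (v - u) < INR j) by (apply INR_up; left; apply Rdiv_lt_0_compat; lra).
  set (J := INR (S j)).
  assert (HJ : 1 < (v - u) * J).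
  { unfold J. rewrite S_INR.
    assert (E : 1 / (v - u) * (v - u) = 1) by (field; lra).
    set (w := 1 / (v - u)) in *. nra. }
  assert (HJp : 0 < J) by (unfold J; apply lt_0_INR; lia).
  set (i := Z.to_nat (up (u * J))).
  destruct (INR_up (u * J) ltac:(nra)) as [Hi1 Hi2]. fold i in Hi1, Hi2.
  exists (Cantor.to_nat (i, j)). unfold qenum. rewrite Cantor.cancel_of_to. simpl. fold J.
  split; apply (Rmult_lt_reg_r J); auto; unfold Rdiv;
    rewrite Rmult_assoc, Rinv_l, Rmult_1_r by lra; nra.
Qed.

Lemma ex_least_index (P : nat -> Prop) k : P k -> exists k', P k' /\ forall j, (j < k')%nat -> ~ P j.
Proof.
  revert P. induction k as [k IH] using (well_founded_induction lt_wf). intros P Hk.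
  destruct (classic (exists j, (j < k)%nat /\ P j)) as [[j [Hj Pj]]|Hn].
  - exact (IH j Hj P Pj).
  - exists k. split; auto. intros j Hj Pj. apply Hn. exists j; auto.
Qed.

Section Extreme.
Variables f g h : R -> R.
Hypothesis Hf : inF f.
Hypothesis Hg : inF g.
Hypothesis Hgc : cont01 g.
Hypothesis Hmaj : majorizes f g.
Hypothesis Hh : inIfg f g h.

Definition loose x := I01 x /\ Iphi f x < h x < Iphi g x.

Let h_convex : convex01 h := proj1 (proj2 Hh).
Let h_between : forall x, I01 x -> Iphi f x <= h x <= Iphi g x := proj1 (proj2 (proj2 Hh)).

Lemma h_ends x : x = 0 \/ x = 1 -> h x = Iphi f x /\ h x = Iphi g x.
Proof.
  intros Hx. pose proof (Iphi_ends_majorizes f g Hmaj x Hx).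
  pose proof (h_between x ltac:(unfold I01; destruct Hx; lra)). lra.
Qed.

Lemma loose_interior x : loose x -> 0 < x < 1.
Proof.
  intros [[H0 H1] H].
  destruct (Req_dec x 0) as [E|]; [pose proof (h_ends x (or_introl E)); lra|].
  destruct (Req_dec x 1) as [E|]; [pose proof (h_ends x (or_intror E)); lra|]. lra.
Qed.

Lemma touch_of_not_loose x : I01 x -> ~ loose x -> h x = Iphi f x \/ h x = Iphi g x.
Proof.
  intros Hx HN. pose proof (h_between x Hx).
  destruct (Req_dec (h x) (Iphi f x)); auto. destruct (Req_dec (h x) (Iphi g x)); auto.
  exfalso. apply HN. split; [auto|lra].
Qed.

Lemma loose_open x : loose x -> exists eta, 0 < eta /\ forall y, Rabs (y - x) < eta -> loose y.
Proof.
  intros HU. pose proof (loose_interior x HU) as Hx. destruct HU as [_ [Ha Hb]].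
  destruct (pos_near_of_continuous (fun y => h y - Iphi f y) x 1 0 0
    (eps_continuous_minus _ _ x (convex01_continuous h h_convex x Hx) (Iphi_continuous f Hf x Hx))
    ltac:(lra) ltac:(lra)) as [d1 [D1 P1]].
  destruct (pos_near_of_continuous (fun y => Iphi g y - h y) x 1 0 0
    (eps_continuous_minus _ _ x (Iphi_continuous g Hg x Hx) (convex01_continuous h h_convex x Hx))
    ltac:(lra) ltac:(lra)) as [d2 [D2 P2]].
  pose proof (Rmin_l d1 d2); pose proof (Rmin_r d1 d2).
  pose proof (Rmin_l x (1 - x)); pose proof (Rmin_r x (1 - x)).
  pose proof (Rmin_l (Rmin d1 d2) (Rmin x (1 - x))); pose proof (Rmin_r (Rmin d1 d2) (Rmin x (1 - x))).
  exists (Rmin (Rmin d1 d2) (Rmin x (1 - x))). split; [repeat apply Rmin_pos; lra|].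
  intros y Hy. specialize (P1 y ltac:(lra)); specialize (P2 y ltac:(lra)).
  apply Rabs_lt_between in Hy. split; [unfold I01|]; lra.
Qed.

Lemma below_g_uniform p q : 0 < p -> p <= q -> q < 1 -> (forall y, p <= y <= q -> h y < Iphi g y) ->
  exists s, 0 < s /\ forall y, p <= y <= q -> s <= Iphi g y - h y.
Proof.
  intros Hp Hpq Hq HU.
  destruct (continuity_ab_min (fun y => Iphi g y - h y) p q Hpq) as [y2 [Hy2 Hy2']].
  { intros c Hc. apply continuity_pt_minus; [apply Iphi_continuity_pt|apply (convex01_continuity_pt h h_convex)]; auto; lra. }
  specialize (HU y2 Hy2'). exists (Iphi g y2 - h y2). split; [lra|]. exact Hy2.
Qed.

Lemma loose_uniform p q : 0 < p -> p <= q -> q < 1 -> (forall y, p <= y <= q -> loose y) ->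
  exists s, 0 < s /\ forall y, p <= y <= q -> s <= h y - Iphi f y /\ s <= Iphi g y - h y.
Proof.
  intros Hp Hpq Hq HU.
  destruct (continuity_ab_min (fun y => h y - Iphi f y) p q Hpq) as [y1 [Hy1 Hy1']].
  { intros c Hc. apply continuity_pt_minus; [apply (convex01_continuity_pt h h_convex)|apply Iphi_continuity_pt]; auto; lra. }
  destruct (below_g_uniform p q Hp Hpq Hq) as [s2 [Hs2 Hy2]]; [intros y Hy; apply HU, Hy|].
  destruct (HU y1 Hy1') as [_ [A1 _]].
  exists (Rmin (h y1 - Iphi f y1) s2). split; [apply Rmin_pos; lra|].
  intros y Hy. specialize (Hy1 y Hy). specialize (Hy2 y Hy). simpl in *.
  pose proof (Rmin_l (h y1 - Iphi f y1) s2). pose proof (Rmin_r (h y1 - Iphi f y1) s2). lra.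
Qed.

Lemma affine_touch_g_support c d al be x : 0 <= c -> c < d -> d <= 1 -> affine_on h c d al be ->
  c <= x <= d -> h x = Iphi g x -> forall z, I01 z -> Iphi g x + be * (z - x) <= Iphi g z.
Proof.
  intros Hc Hcd Hd HL Hx E z Hz.
  pose proof (affine_on_support h h_convex c d al be Hc Hcd Hd HL z Hz).
  pose proof (h_between z Hz). rewrite <- E, (HL x Hx). lra.
Qed.

Lemma touch_g_slope c d al be x : 0 <= c -> c < d -> d <= 1 -> affine_on h c d al be ->
  0 < x < 1 -> c <= x <= d -> h x = Iphi g x -> be = g x.
Proof.
  intros Hc Hcd Hd HL Hx Hxcd E.
  pose proof (affine_touch_g_support c d al be x Hc Hcd Hd HL Hxcd E) as Hsupp.
  pose proof (Iphi_deriv01 g Hg Hgc x ltac:(unfold I01; lra)) as Hder.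
  apply Rle_antisym; [apply (deriv01_support_le (Iphi g) x)|apply (deriv01_support_ge (Iphi g) x)];
    auto; lra.
Qed.

Lemma touch_g_cond_a c d al be x : 0 <= c -> c < d -> d <= 1 -> affine_on h c d al be ->
  0 < x < 1 -> (x = c \/ x = d) -> h x = Iphi g x -> cond_a h (Iphi g) c d.
Proof.
  intros Hc Hcd Hd HL Hx Hxe E.
  assert (Hxcd : c <= x <= d) by (destruct Hxe; subst; lra).
  pose proof (touch_g_slope c d al be x Hc Hcd Hd HL Hx Hxcd E) as Hbe.
  exists x. split; [auto|]. exists (g x). split; [apply Iphi_deriv01; auto; unfold I01; lra|].
  intros z Hz. rewrite (HL z Hz), <- E, (HL x Hxcd), Hbe. ring.
Qed.

Lemma slope_lt_g0 d al be : 0 < d -> d <= 1 -> affine_on h 0 d al be ->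
  ~ cond_a h (Iphi g) 0 d -> be < g 0.
Proof.
  intros Hd Hd1 HL HN. destruct (h_ends 0 (or_introl eq_refl)) as [_ E].
  pose proof (affine_touch_g_support 0 d al be 0 ltac:(lra) Hd Hd1 HL ltac:(lra) E) as Hsupp.
  pose proof (Iphi_deriv01 g Hg Hgc 0 ltac:(unfold I01; lra)) as Hder.
  destruct (Rle_lt_or_eq_dec _ _ (deriv01_support_le _ 0 _ be Hder ltac:(lra) Hsupp)) as [|Eq];
    [auto|exfalso].
  apply HN. exists 0. split; [auto|]. exists (g 0). split; [exact Hder|].
  intros z Hz. rewrite (HL z Hz), <- E, (HL 0) by lra. rewrite Eq. ring.
Qed.

Lemma slope_gt_g1 c al be : 0 <= c -> c < 1 -> affine_on h c 1 al be ->
  ~ cond_a h (Iphi g) c 1 -> g 1 < be.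
Proof.
  intros Hc Hc1 HL HN. destruct (h_ends 1 (or_intror eq_refl)) as [_ E].
  pose proof (affine_touch_g_support c 1 al be 1 Hc Hc1 ltac:(lra) HL ltac:(lra) E) as Hsupp.
  pose proof (Iphi_deriv01 g Hg Hgc 1 ltac:(unfold I01; lra)) as Hder.
  destruct (Rle_lt_or_eq_dec _ _ (deriv01_support_ge _ 1 _ be Hder ltac:(lra) Hsupp)) as [|Eq];
    [auto|exfalso].
  apply HN. exists 1. split; [auto|]. exists (g 1). split; [exact Hder|].
  intros z Hz. rewrite (HL z Hz), <- E, (HL 1) by lra. rewrite Eq. ring.
Qed.

Lemma lower_gap_chord u k al be y : 0 <= u -> u < k -> k <= 1 -> affine_on h u k al be ->
  u <= y <= k ->
  (k - y) * (h u - Iphi f u) + (y - u) * (h k - Iphi f k) <= (k - u) * (h y - Iphi f y).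
Proof.
  intros Hu Huk Hk HL Hy. rewrite (HL u), (HL y), (HL k) by lra.
  destruct (Req_dec y u) as [->|Hyu]; [nra|]. destruct (Req_dec y k) as [->|Hyk]; [nra|].
  pose proof (convex01_chord (Iphi f) (Iphi_convex f Hf) u y k Hu ltac:(lra) ltac:(lra) Hk). nra.
Qed.

Lemma lower_gap_left u k al be : 0 <= u -> u < k -> k < 1 -> affine_on h u k al be -> loose k ->
  exists kap, 0 < kap /\ forall y, u <= y <= k -> kap * (y - u) <= h y - Iphi f y.
Proof.
  intros Hu Huk Hk HL [_ [HUk _]]. pose proof (h_between u ltac:(unfold I01; lra)).
  exists ((h k - Iphi f k) / (k - u)). split; [apply Rdiv_lt_0_compat; lra|].
  intros y Hy. pose proof (lower_gap_chord u k al be y Hu Huk ltac:(lra) HL Hy).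
  apply (Rmult_le_reg_l (k - u)); [lra|].
  replace ((k - u) * ((h k - Iphi f k) / (k - u) * (y - u))) with ((y - u) * (h k - Iphi f k))
    by (field; lra).
  nra.
Qed.

Lemma lower_gap_right k w al be : 0 < k -> k < w -> w <= 1 -> affine_on h k w al be -> loose k ->
  exists kap, 0 < kap /\ forall y, k <= y <= w -> kap * (w - y) <= h y - Iphi f y.
Proof.
  intros Hk Hkw Hw HL [_ [HUk _]]. pose proof (h_between w ltac:(unfold I01; lra)).
  exists ((h k - Iphi f k) / (w - k)). split; [apply Rdiv_lt_0_compat; lra|].
  intros y Hy. pose proof (lower_gap_chord k w al be y ltac:(lra) Hkw Hw HL Hy).
  apply (Rmult_le_reg_l (w - k)); [lra|].
  replace ((w - k) * ((h k - Iphi f k) / (w - k) * (w - y))) with ((w - y) * (h k - Iphi f k))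
    by (field; lra).
  nra.
Qed.

Lemma upper_gap_linear p q : 0 < p -> p < q -> q < 1 -> (forall y, p <= y <= q -> h y < Iphi g y) ->
  exists kap, 0 < kap /\ forall y, p <= y <= q -> kap * (y - p) <= Iphi g y - h y
                                            /\ kap * (q - y) <= Iphi g y - h y.
Proof.
  intros Hp Hpq Hq HU. destruct (below_g_uniform p q Hp ltac:(lra) Hq HU) as [m [Hm Hmin]].
  exists (m / (q - p)). split; [apply Rdiv_lt_0_compat; lra|].
  intros y Hy. specialize (Hmin y Hy).
  assert (m / (q - p) * (q - p) = m) by (field; lra).
  assert (0 < m / (q - p)) by (apply Rdiv_lt_0_compat; lra). split; nra.
Qed.

Lemma upper_gap_left u k al be : 0 <= u -> u < k -> k < 1 -> affine_on h u k al be ->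
  (forall y, u < y <= k -> loose y) ->
  (u = 0 /\ ~ cond_a h (Iphi g) 0 k) \/ (0 < u /\ h u < Iphi g u) ->
  exists kap, 0 < kap /\ forall y, u <= y <= k -> kap * (y - u) <= Iphi g y - h y.
Proof.
  intros Hu Huk Hk HL HU [[-> HN]|[Hu0 Hgu]].
  - pose proof (slope_lt_g0 k al be Huk ltac:(lra) HL HN).
    destruct (h_ends 0 (or_introl eq_refl)) as [_ E].
    exists (g 0 - be). split; [lra|]. intros y Hy.
    pose proof (Iphi_subdiff g Hg 0 ltac:(unfold I01; lra) y ltac:(unfold I01; lra)).
    rewrite (HL y), <- E, (HL 0) in * by lra. lra.
  - destruct (upper_gap_linear u k Hu0 Huk Hk) as [kap [Hkap Hgap]].
    { intros y Hy. destruct (Req_dec y u) as [->|]; [auto|]. apply HU; lra. }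
    exists kap. split; [auto|]. intros y Hy. apply Hgap, Hy.
Qed.

Lemma upper_gap_right k w al be : 0 < k -> k < w -> w <= 1 -> affine_on h k w al be ->
  (forall y, k <= y < w -> loose y) ->
  (w = 1 /\ ~ cond_a h (Iphi g) k 1) \/ (w < 1 /\ h w < Iphi g w) ->
  exists kap, 0 < kap /\ forall y, k <= y <= w -> kap * (w - y) <= Iphi g y - h y.
Proof.
  intros Hk Hkw Hw HL HU [[-> HN]|[Hw1 Hgw]].
  - pose proof (slope_gt_g1 k al be ltac:(lra) Hkw HL HN).
    destruct (h_ends 1 (or_intror eq_refl)) as [_ E].
    exists (be - g 1). split; [lra|]. intros y Hy.
    pose proof (Iphi_subdiff g Hg 1 ltac:(unfold I01; lra) y ltac:(unfold I01; lra)).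
    rewrite (HL y), <- E, (HL 1) in * by lra. lra.
  - destruct (upper_gap_linear k w Hk Hkw Hw1) as [kap [Hkap Hgap]].
    { intros y Hy. destruct (Req_dec y w) as [->|]; [auto|]. apply HU; lra. }
    exists kap. split; [auto|]. intros y Hy. apply Hgap, Hy.
Qed.

Lemma below_g_at_end c d al be x : 0 < x < 1 -> 0 <= c -> c < d -> d <= 1 ->
  affine_on h c d al be -> (x = c \/ x = d) -> ~ cond_a h (Iphi g) c d -> h x < Iphi g x.
Proof.
  intros Hx Hc Hcd Hd HL Hxe HN. pose proof (h_between x ltac:(unfold I01; lra)).
  destruct (Req_dec (h x) (Iphi g x)) as [E|]; [|lra].
  exfalso. exact (HN (touch_g_cond_a c d al be x Hc Hcd Hd HL Hx Hxe E)).
Qed.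

Hypothesis Hext : extreme_Ifg f g h.

Lemma extreme_perturb_zero (psi : R -> R) eps : 0 < eps ->
  convex01 (fun y => h y + eps * psi y) -> convex01 (fun y => h y + (- eps) * psi y) ->
  (forall y, I01 y -> Iphi f y <= h y - eps * Rabs (psi y) /\ h y + eps * Rabs (psi y) <= Iphi g y) ->
  forall x, I01 x -> psi x = 0.
Proof.
  intros He C1 C2 B x Hx.
  assert (Hin : forall s, s = eps \/ s = - eps -> inIfg f g (fun y => h y + s * psi y)).
  { intros s Hs. apply (inIfg_of_convex f g Hf Hg Hmaj); [destruct Hs; subst; auto|].
    intros y Hy. destruct (B y Hy). pose proof (Rle_abs (psi y)). pose proof (Rle_abs (- psi y)).
    rewrite Rabs_Ropp in *. destruct Hs; subst; split; nra. }
  destruct Hext as [_ E].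
  specialize (E _ _ (1 / 2) (Hin eps (or_introl eq_refl)) (Hin (- eps) (or_intror eq_refl))
                ltac:(lra) ltac:(intros; cbv beta; field) x Hx).
  simpl in E. nra.
Qed.

Lemma bump_zero t1 t2 t3 t4 m1 m2 m3 m4 a1 a2 a3 eps :
  I01 t1 -> I01 t2 -> I01 t3 -> I01 t4 -> t1 <= t2 -> t2 <= t3 -> t3 <= t4 ->
  m1 <= m2 -> m2 <= m3 -> m3 <= m4 ->
  subdiff h t1 m1 -> subdiff h t2 m2 -> subdiff h t3 m3 -> subdiff h t4 m4 ->
  0 < eps -> eps * (Rabs a1 + Rabs a2 + Rabs a3) <= 1 ->
  (forall y, I01 y -> Iphi f y <= h y - eps * Rabs (bump h t1 t2 t3 t4 m1 m2 m3 m4 a1 a2 a3 y)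
                  /\ h y + eps * Rabs (bump h t1 t2 t3 t4 m1 m2 m3 m4 a1 a2 a3 y) <= Iphi g y) ->
  forall x, I01 x -> bump h t1 t2 t3 t4 m1 m2 m3 m4 a1 a2 a3 x = 0.
Proof.
  intros I1 I2 I3 I4 T12 T23 T34 M12 M23 M34 S1 S2 S3 S4 He Ea HB.
  pose proof (Rle_abs a1); pose proof (Rle_abs (- a1)); pose proof (Rle_abs a2);
    pose proof (Rle_abs (- a2)); pose proof (Rle_abs a3); pose proof (Rle_abs (- a3)).
  rewrite !Rabs_Ropp in *.
  apply (extreme_perturb_zero _ eps He); auto;
    apply bump_perturb_convex; auto; try apply h_convex; nra.
Qed.

Lemma bump_zero_on_loose t1 t2 t3 t4 m1 m2 m3 m4 a1 a2 a3 :
  0 < t1 -> t1 <= t2 -> t2 <= t3 -> t3 <= t4 -> t4 < 1 -> (forall y, t1 <= y <= t4 -> loose y) ->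
  m1 <= m2 -> m2 <= m3 -> m3 <= m4 ->
  subdiff h t1 m1 -> subdiff h t2 m2 -> subdiff h t3 m3 -> subdiff h t4 m4 ->
  (forall y, a1 * (tline h t2 m2 y - tline h t1 m1 y) + a2 * (tline h t3 m3 y - tline h t2 m2 y)
             + a3 * (tline h t4 m4 y - tline h t3 m3 y) = 0) ->
  forall x, I01 x -> bump h t1 t2 t3 t4 m1 m2 m3 m4 a1 a2 a3 x = 0.
Proof.
  intros P1 T12 T23 T34 P4 HU M12 M23 M34 S1 S2 S3 S4 Hcancel.
  assert (I1 : I01 t1) by (unfold I01; lra). assert (I2 : I01 t2) by (unfold I01; lra).
  assert (I3 : I01 t3) by (unfold I01; lra). assert (I4 : I01 t4) by (unfold I01; lra).
  destruct (bump_bounded h h_convex t1 t2 t3 t4 m1 m2 m3 m4 a1 a2 a3 I1 I2 I3 I4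
              T12 T23 T34 S1 Hcancel) as [B [HB Hbnd]].
  destruct (loose_uniform t1 t4 P1 ltac:(lra) P4 HU) as [s [Hs Hsl]].
  destruct (exists_small_scale (Rabs a1 + Rabs a2 + Rabs a3) B s
              ltac:(pose proof (Rabs_pos a1); pose proof (Rabs_pos a2); pose proof (Rabs_pos a3); lra)
              HB Hs) as [eps [Heps [Ea Eb]]].
  apply (bump_zero t1 t2 t3 t4 m1 m2 m3 m4 a1 a2 a3 eps); auto.
  intros y Hy. pose proof (h_between y Hy).
  destruct (Rlt_or_le y t1) as [Hlt|Hge]; [rewrite bump_left, Rabs_R0 by lra; lra|].
  destruct (Rlt_or_le t4 y) as [Hgt|Hle]; [rewrite bump_right, Rabs_R0 by (auto; lra); lra|].
  specialize (Hsl y (conj Hge Hle)). specialize (Hbnd y Hy).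
  assert (eps * Rabs (bump h t1 t2 t3 t4 m1 m2 m3 m4 a1 a2 a3 y) <= eps * B)
    by (apply Rmult_le_compat_l; lra).
  lra.
Qed.

(* Were [h] kinked in each of [[t1, t2]], [[t2, t3]], [[t3, t4]] inside the loose set,
   the bump built on the supporting lines at [t1 .. t4] would be a nonzero admissible
   perturbation in both directions. *)
Lemma no_three_kinks t1 t2 t3 t4 : 0 < t1 -> t1 < t2 -> t2 < t3 -> t3 < t4 -> t4 < 1 ->
  (forall y, t1 <= y <= t4 -> loose y) ->
  ~ chord_affine h t1 t2 -> ~ chord_affine h t2 t3 -> ~ chord_affine h t3 t4 -> False.
Proof.
  intros P1 P12 P23 P34 P4 HU N1 N2 N3.
  destruct (convex01_subdiff_exists h h_convex t1 ltac:(lra)) as [m1 S1].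
  destruct (convex01_subdiff_exists h h_convex t2 ltac:(lra)) as [m2 S2].
  destruct (convex01_subdiff_exists h h_convex t3 ltac:(lra)) as [m3 S3].
  destruct (convex01_subdiff_exists h h_convex t4 ltac:(lra)) as [m4 S4].
  pose proof (tline_gap_pos h h_convex t1 t2 m1 ltac:(lra) P12 ltac:(lra) S1 N1) as E1.
  pose proof (tline_gap_pos h h_convex t2 t3 m2 ltac:(lra) P23 ltac:(lra) S2 N2) as E2.
  pose proof (tline_gap_pos h h_convex t3 t4 m3 ltac:(lra) P34 ltac:(lra) S3 N3) as E3.
  destruct (kinks_cancel h t1 t2 t3 t4 m1 m2 m3 m4 ltac:(unfold I01; lra) ltac:(unfold I01; lra)
              ltac:(unfold I01; lra) P12 P23 P34 S2 S3 S4 E1 E2 E3)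
    as [M12 [M23 [M34 [a1 [a2 [a3 [A1 Hcancel]]]]]]].
  pose proof (bump_zero_on_loose t1 t2 t3 t4 m1 m2 m3 m4 a1 a2 a3 P1 ltac:(lra) ltac:(lra)
                ltac:(lra) P4 HU ltac:(lra) ltac:(lra) ltac:(lra) S1 S2 S3 S4 Hcancel
                t2 ltac:(unfold I01; lra)) as Ht2.
  rewrite bump_12 in Ht2 by lra. apply Rmult_integral in Ht2. lra.
Qed.

Lemma loose_affine_right x : loose x -> exists d, 0 < d /\ chord_affine h x (x + d).
Proof.
  intros HU. pose proof (loose_interior x HU) as Hx. destruct (loose_open x HU) as [eta [Heta HO]].
  apply NNPP. intros Hn.
  assert (Hn' : forall v, x < v -> ~ chord_affine h x v).
  { intros v Hv HA. apply Hn. exists (v - x). replace (x + (v - x)) with v by ring. split; [lra|auto]. }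
  pose proof (Rmin_r eta (1 - x)). pose proof (Rmin_l eta (1 - x)).
  pose proof (Rmin_pos eta (1 - x) Heta ltac:(lra)).
  set (t4 := x + Rmin eta (1 - x) / 2).
  assert (HU4 : forall y, x <= y <= t4 -> loose y)
    by (intros y Hy; apply HO; unfold t4 in Hy; apply Rabs_lt_between; lra).
  destruct (chord_affine_shrink_left h h_convex x t4 ltac:(lra) ltac:(unfold t4; lra)
              ltac:(unfold t4; lra) (Hn' t4 ltac:(unfold t4; lra))) as [t3 [H3 N34]].
  destruct (chord_affine_shrink_left h h_convex x t3 ltac:(lra) ltac:(lra) ltac:(unfold t4 in *; lra)
              (Hn' t3 ltac:(lra))) as [t2 [H2 N23]].
  exact (no_three_kinks x t2 t3 t4 ltac:(lra) ltac:(lra) ltac:(lra) ltac:(lra) ltac:(unfold t4; lra)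
           HU4 (Hn' t2 ltac:(lra)) N23 N34).
Qed.

Lemma loose_affine_left x : loose x -> exists d, 0 < d /\ chord_affine h (x - d) x.
Proof.
  intros HU. pose proof (loose_interior x HU) as Hx. destruct (loose_open x HU) as [eta [Heta HO]].
  apply NNPP. intros Hn.
  assert (Hn' : forall u, u < x -> ~ chord_affine h u x).
  { intros u Hu HA. apply Hn. exists (x - u). replace (x - (x - u)) with u by ring. split; [lra|auto]. }
  pose proof (Rmin_r eta x). pose proof (Rmin_l eta x). pose proof (Rmin_pos eta x Heta ltac:(lra)).
  set (t1 := x - Rmin eta x / 2).
  assert (HU1 : forall y, t1 <= y <= x -> loose y)
    by (intros y Hy; apply HO; unfold t1 in Hy; apply Rabs_lt_between; lra).
  destruct (chord_affine_shrink_right h h_convex t1 x ltac:(unfold t1; lra) ltac:(unfold t1; lra)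
              ltac:(lra) (Hn' t1 ltac:(unfold t1; lra))) as [t2 [H2 N12]].
  destruct (chord_affine_shrink_right h h_convex t2 x ltac:(unfold t1 in *; lra) ltac:(lra) ltac:(lra)
              (Hn' t2 ltac:(lra))) as [t3 [H3 N23]].
  exact (no_three_kinks t1 t2 t3 x ltac:(unfold t1; lra) ltac:(lra) ltac:(lra) ltac:(lra) ltac:(lra)
           HU1 N12 N23 (Hn' t3 ltac:(lra))).
Qed.

(* Two adjacent affine pieces meeting in a kink at [k], with room below [Iphi g] and above
   [Iphi f] growing linearly away from their outer ends: the bump on the supporting lines
   at [u], [k], [k], [w] is then a tent that can be added and subtracted. *)
Lemma no_kink_between u k w alL beL alR beR mu mw :
  0 <= u -> u < k -> k < w -> w <= 1 -> affine_on h u k alL beL -> affine_on h k w alR beR ->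
  beL < beR -> subdiff h u mu -> mu < beL -> subdiff h w mw -> beR < mw ->
  (exists kap, 0 < kap /\ forall y, u <= y <= k ->
     kap * (y - u) <= h y - Iphi f y /\ kap * (y - u) <= Iphi g y - h y) ->
  (exists kap, 0 < kap /\ forall y, k <= y <= w ->
     kap * (w - y) <= h y - Iphi f y /\ kap * (w - y) <= Iphi g y - h y) ->
  False.
Proof.
  intros Hu Huk Hkw Hw HLL HLR Hbe Su Hmu Sw Hmw [kL [HkL SL]] [kR [HkR SR]].
  assert (Sk1 : subdiff h k beL) by (apply (affine_on_subdiff h h_convex u k alL beL); auto; lra).
  assert (Sk2 : subdiff h k beR) by (apply (affine_on_subdiff h h_convex k w alR beR); auto; lra).
  destruct (tent_bump h u k w alL beL alR beR mu mw Hu Huk Hkw Hw HLL HLR Hmu Hbe Hmw)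
    as [a1 [a2 [a3 [P12 [P34 Pw]]]]].
  set (psi := bump h u k k w mu beL beR mw a1 a2 a3) in *.
  destruct (exists_small_scale (Rabs a1 + Rabs a2 + Rabs a3) (w - u) (Rmin kL kR)
              ltac:(pose proof (Rabs_pos a1); pose proof (Rabs_pos a2); pose proof (Rabs_pos a3); lra)
              ltac:(lra) ltac:(apply Rmin_pos; lra)) as [eps [Heps [Ea Eb]]].
  pose proof (Rmin_l kL kR). pose proof (Rmin_r kL kR).
  assert (Hk : psi k = 0).
  { apply (bump_zero u k k w mu beL beR mw a1 a2 a3 eps); auto; try (unfold I01; lra); try lra.
    intros y Hy. pose proof (h_between y Hy). fold psi.
    destruct (Rlt_or_le y u) as [Hlt|Hge]; [unfold psi; rewrite bump_left, Rabs_R0 by lra; lra|].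
    destruct (Rlt_or_le w y) as [Hgt|Hle]; [rewrite Pw, Rabs_R0 by lra; lra|].
    destruct (Rle_or_lt y k) as [Hyk|Hyk].
    - rewrite P12, Rabs_right by nra. destruct (SL y ltac:(lra)).
      assert (eps * (w - k) <= kL) by nra.
      assert (eps * (w - k) * (y - u) <= kL * (y - u)) by (apply Rmult_le_compat_r; lra). lra.
    - rewrite P34, Rabs_right by nra. destruct (SR y ltac:(lra)).
      assert (eps * (k - u) <= kR) by nra.
      assert (eps * (k - u) * (w - y) <= kR * (w - y)) by (apply Rmult_le_compat_r; lra). lra. }
  rewrite P12 in Hk by lra. nra.
Qed.

Lemma outer_slope_left u k al be : 0 <= u -> u < k -> loose k -> affine_on h u k al be ->
  (forall y, u < y < k -> loose y) ->
  (loose u -> forall eta, 0 < eta -> exists z, u - eta < z < u /\ h z <> al + be * z) ->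
  ~ cond_a h (Iphi g) u k -> exists mu, mu < be /\ subdiff h u mu.
Proof.
  intros Hu Huk HUk HL HUin Hmax HN. pose proof (loose_interior k HUk) as Hk.
  assert (Hhu : h u = al + be * u) by (apply HL; lra).
  destruct (classic (loose u)) as [HUu|HUu].
  - pose proof (loose_interior u HUu) as Hu'.
    destruct (loose_affine_left u HUu) as [d [Hd HA]].
    pose proof (Rmin_l d u); pose proof (Rmin_r d u). set (d' := Rmin d u) in *.
    assert (Hd' : 0 < d') by (apply Rmin_pos; lra).
    pose proof (affine_on_of_chord h (u - d) u ltac:(lra) HA) as L0.
    set (nu := (h u - h (u - d)) / (u - (u - d))) in L0.
    set (al' := h (u - d) - nu * (u - d)) in L0.
    assert (L : affine_on h (u - d') u al' nu) by (intros z Hz; apply L0; lra).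
    assert (S : subdiff h u nu) by (apply (affine_on_subdiff h h_convex (u - d') u al' nu); auto; lra).
    exists nu. split; [|exact S].
    assert (Hu2 : h u = al' + nu * u) by (apply L; lra).
    assert (Hle : nu <= be).
    { pose proof (S k ltac:(unfold I01; lra)). rewrite (HL k) in * by lra. nra. }
    destruct (Rle_lt_or_eq_dec _ _ Hle) as [|E]; [auto|exfalso].
    destruct (Hmax HUu d' Hd') as [z [Hz Hne]]. apply Hne.
    rewrite (L z) by lra. rewrite E in *. lra.
  - destruct (Req_dec u 0) as [->|Hu0].
    + exists (be - 1). split; [lra|]. intros y Hy.
      pose proof (affine_on_support h h_convex 0 k al be ltac:(lra) Huk ltac:(lra) HL y Hy).
      destruct Hy. nra.
    + destruct (touch_of_not_loose u ltac:(unfold I01; lra) HUu) as [Ef|Eg].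
      * exists (f u). split.
        -- apply Rnot_le_lt. intros Hge.
           set (y := (u + k) / 2). destruct (HUin y ltac:(unfold y; lra)) as [Iy [Hy _]].
           pose proof (Iphi_subdiff f Hf u ltac:(unfold I01; lra) y Iy).
           rewrite (HL y) in Hy by (unfold y; lra). unfold y in *. nra.
        -- intros y Hy. pose proof (Iphi_subdiff f Hf u ltac:(unfold I01; lra) y Hy).
           pose proof (h_between y Hy). lra.
      * exfalso. apply HN, (touch_g_cond_a u k al be u); auto; lra.
Qed.

Lemma outer_slope_right k w al be : k < w -> w <= 1 -> loose k -> affine_on h k w al be ->
  (forall y, k < y < w -> loose y) ->
  (loose w -> forall eta, 0 < eta -> exists z, w < z < w + eta /\ h z <> al + be * z) ->
  ~ cond_a h (Iphi g) k w -> exists mw, be < mw /\ subdiff h w mw.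
Proof.
  intros Hkw Hw HUk HL HUin Hmax HN. pose proof (loose_interior k HUk) as Hk.
  assert (Hhw : h w = al + be * w) by (apply HL; lra).
  destruct (classic (loose w)) as [HUw|HUw].
  - pose proof (loose_interior w HUw) as Hw'.
    destruct (loose_affine_right w HUw) as [d [Hd HA]].
    pose proof (Rmin_l d (1 - w)); pose proof (Rmin_r d (1 - w)). set (d' := Rmin d (1 - w)) in *.
    assert (Hd' : 0 < d') by (apply Rmin_pos; lra).
    pose proof (affine_on_of_chord h w (w + d) ltac:(lra) HA) as L0.
    set (nu := (h (w + d) - h w) / (w + d - w)) in L0.
    set (al' := h w - nu * w) in L0.
    assert (L : affine_on h w (w + d') al' nu) by (intros z Hz; apply L0; lra).
    assert (S : subdiff h w nu) by (apply (affine_on_subdiff h h_convex w (w + d') al' nu); auto; lra).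
    exists nu. split; [|exact S].
    assert (Hw2 : h w = al' + nu * w) by (apply L; lra).
    assert (Hle : be <= nu).
    { pose proof (S k ltac:(unfold I01; lra)). rewrite (HL k) in * by lra. nra. }
    destruct (Rle_lt_or_eq_dec _ _ Hle) as [|E]; [auto|exfalso].
    destruct (Hmax HUw d' Hd') as [z [Hz Hne]]. apply Hne.
    rewrite (L z) by lra. rewrite <- E in *. lra.
  - destruct (Req_dec w 1) as [->|Hw1].
    + exists (be + 1). split; [lra|]. intros y Hy.
      pose proof (affine_on_support h h_convex k 1 al be ltac:(lra) Hkw ltac:(lra) HL y Hy).
      destruct Hy. nra.
    + destruct (touch_of_not_loose w ltac:(unfold I01; lra) HUw) as [Ef|Eg].
      * exists (f w). split.
        -- apply Rnot_le_lt. intros Hge.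
           set (y := (k + w) / 2). destruct (HUin y ltac:(unfold y; lra)) as [Iy [Hy _]].
           pose proof (Iphi_subdiff f Hf w ltac:(unfold I01; lra) y Iy).
           rewrite (HL y) in Hy by (unfold y; lra). unfold y in *. nra.
        -- intros y Hy. pose proof (Iphi_subdiff f Hf w ltac:(unfold I01; lra) y Hy).
           pose proof (h_between y Hy). lra.
      * exfalso. apply HN, (touch_g_cond_a k w al be w); auto; lra.
Qed.

Lemma outer_slack_left u k al be : 0 <= u -> u < k -> loose k -> affine_on h u k al be ->
  (forall y, u < y < k -> loose y) -> ~ cond_a h (Iphi g) u k ->
  exists kap, 0 < kap /\ forall y, u <= y <= k ->
    kap * (y - u) <= h y - Iphi f y /\ kap * (y - u) <= Iphi g y - h y.
Proof.
  intros Hu Huk HUk HL HUin HN. pose proof (loose_interior k HUk) as Hk.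
  destruct (lower_gap_left u k al be Hu Huk ltac:(lra) HL HUk) as [k1 [Hk1 S1]].
  destruct (upper_gap_left u k al be Hu Huk ltac:(lra) HL) as [k2 [Hk2 S2]].
  { intros y Hy. destruct (Req_dec y k) as [->|]; [auto|apply HUin; lra]. }
  { destruct (Req_dec u 0) as [->|Hu0]; [left; auto|right].
    split; [lra|apply (below_g_at_end u k al be u); auto; lra]. }
  pose proof (Rmin_l k1 k2). pose proof (Rmin_r k1 k2).
  exists (Rmin k1 k2). split; [apply Rmin_pos; auto|].
  intros y Hy. specialize (S1 y Hy). specialize (S2 y Hy).
  split; [apply Rle_trans with (k1 * (y - u))|apply Rle_trans with (k2 * (y - u))];
    auto; apply Rmult_le_compat_r; lra.
Qed.

Lemma outer_slack_right k w al be : k < w -> w <= 1 -> loose k -> affine_on h k w al be ->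
  (forall y, k < y < w -> loose y) -> ~ cond_a h (Iphi g) k w ->
  exists kap, 0 < kap /\ forall y, k <= y <= w ->
    kap * (w - y) <= h y - Iphi f y /\ kap * (w - y) <= Iphi g y - h y.
Proof.
  intros Hkw Hw HUk HL HUin HN. pose proof (loose_interior k HUk) as Hk.
  destruct (lower_gap_right k w al be ltac:(lra) Hkw Hw HL HUk) as [k1 [Hk1 S1]].
  destruct (upper_gap_right k w al be ltac:(lra) Hkw Hw HL) as [k2 [Hk2 S2]].
  { intros y Hy. destruct (Req_dec y k) as [->|]; [auto|apply HUin; lra]. }
  { destruct (Req_dec w 1) as [->|Hw1]; [left; auto|right].
    split; [lra|apply (below_g_at_end k w al be w); auto; lra]. }
  pose proof (Rmin_l k1 k2). pose proof (Rmin_r k1 k2).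
  exists (Rmin k1 k2). split; [apply Rmin_pos; auto|].
  intros y Hy. specialize (S1 y Hy). specialize (S2 y Hy).
  split; [apply Rle_trans with (k1 * (w - y))|apply Rle_trans with (k2 * (w - y))];
    auto; apply Rmult_le_compat_r; lra.
Qed.

Definition piece_slope q :=
  epsilon (inhabits 0) (fun s => loose q -> exists d, 0 < d /\ affine_on h q (q + d) (h q - s * q) s).

Lemma piece_slope_spec q : loose q ->
  exists d, 0 < d /\ affine_on h q (q + d) (h q - piece_slope q * q) (piece_slope q).
Proof.
  intros HU. unfold piece_slope. apply (epsilon_spec (inhabits 0)
    (fun s => loose q -> exists d, 0 < d /\ affine_on h q (q + d) (h q - s * q) s)); [|exact HU].
  destruct (loose_affine_right q HU) as [d [Hd HA]].
  exists ((h (q + d) - h q) / (q + d - q)). intros _. exists d. split; [exact Hd|].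
  exact (affine_on_of_chord h q (q + d) ltac:(lra) HA).
Qed.

Definition piece_line q z := (h q - piece_slope q * q) + piece_slope q * z.
Definition on_piece q z := loose z /\ h z = piece_line q z.
Definition reach_right q y := y <= 1 /\ forall z, q <= z < y -> on_piece q z.
Definition reach_left q y := y <= 1 /\ forall z, q - y < z <= q -> on_piece q z.

Lemma reach_right_bound q : bound (reach_right q).
Proof. exists 1. intros y [H _]. exact H. Qed.

Lemma reach_right_inhabited q : exists y, reach_right q y.
Proof. exists (Rmin q 1). split; [apply Rmin_r|]. intros z Hz. pose proof (Rmin_l q 1). lra. Qed.

Lemma reach_left_bound q : bound (reach_left q).
Proof. exists 1. intros y [H _]. exact H. Qed.

Lemma reach_left_inhabited q : exists y, reach_left q y.
Proof. exists 0. split; [lra|]. intros z Hz. lra. Qed.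

(* The maximal affine piece of [h] through a loose point [q] is
   [[piece_left q, piece_right q]]. *)
Definition piece_right q :=
  proj1_sig (completeness (reach_right q) (reach_right_bound q) (reach_right_inhabited q)).
Definition left_reach q :=
  proj1_sig (completeness (reach_left q) (reach_left_bound q) (reach_left_inhabited q)).
Definition piece_left q := q - left_reach q.

Lemma piece_right_lub q : is_lub (reach_right q) (piece_right q).
Proof. unfold piece_right. destruct completeness; auto. Qed.

Lemma left_reach_lub q : is_lub (reach_left q) (left_reach q).
Proof. unfold left_reach. destruct completeness; auto. Qed.

Lemma piece_bounds q : loose q ->
  q < piece_right q /\ piece_right q <= 1 /\ 0 <= piece_left q /\ piece_left q <= q.
Proof.
  intros HU. pose proof (loose_interior q HU) as Hq.
  destruct (piece_right_lub q) as [B1 B2]. destruct (left_reach_lub q) as [C1 C2].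
  pose proof (C1 0 ltac:(split; [lra|intros z Hz; lra])) as C0.
  split; [|split; [|split]].
  - destruct (piece_slope_spec q HU) as [d [Hd HL]]. destruct (loose_open q HU) as [eta [Heta HO]].
    pose proof (Rmin_l (Rmin d eta) (1 - q)). pose proof (Rmin_r (Rmin d eta) (1 - q)).
    pose proof (Rmin_l d eta). pose proof (Rmin_r d eta).
    assert (Hm : 0 < Rmin (Rmin d eta) (1 - q)) by (repeat apply Rmin_pos; lra).
    set (y := q + Rmin (Rmin d eta) (1 - q) / 2).
    assert (HB : reach_right q y).
    { split; [unfold y; lra|]. intros z Hz. unfold y in Hz. split.
      - apply HO, Rabs_lt_between. lra.
      - rewrite (HL z) by lra. unfold piece_line. ring. }
    specialize (B1 y HB). unfold y in B1. lra.
  - apply B2. intros y [Hy _]. exact Hy.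
  - unfold piece_left.
    assert (left_reach q <= q); [|lra].
    apply C2. intros y [Hy1 Hy2]. apply Rnot_lt_le. intros Hlt.
    destruct (Hy2 ((q - y) / 2) ltac:(lra)) as [HUz _]. pose proof (loose_interior _ HUz). lra.
  - unfold piece_left. lra.
Qed.

Lemma on_piece_inner q : loose q -> forall z, piece_left q < z < piece_right q -> on_piece q z.
Proof.
  intros HU z Hz. destruct (piece_right_lub q) as [_ B2]. destruct (left_reach_lub q) as [_ C2].
  apply NNPP. intros Hn. destruct (Rle_or_lt q z) as [Hqz|Hqz].
  - assert (piece_right q <= z); [|lra].
    apply B2. intros y [Hy1 Hy2]. apply Rnot_lt_le. intros Hlt. apply Hn, Hy2. lra.
  - unfold piece_left in Hz. assert (left_reach q <= q - z); [|lra].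
    apply C2. intros y [Hy1 Hy2]. apply Rnot_lt_le. intros Hlt. apply Hn, Hy2. lra.
Qed.

Lemma on_piece_range q z : loose q -> z = q \/ piece_left q < z < piece_right q -> on_piece q z.
Proof. intros HU [->|Hz]; [split; [exact HU|unfold piece_line; ring]|apply on_piece_inner; auto]. Qed.

(* The ends of the piece belong to it by continuity of [h]. *)
Lemma piece_affine q : loose q ->
  affine_on h (piece_left q) (piece_right q) (h q - piece_slope q * q) (piece_slope q).
Proof.
  intros HU. destruct (piece_bounds q HU) as [P1 [P2 [P3 P4]]]. pose proof (loose_interior q HU).
  assert (Hin : forall z, z = q \/ piece_left q < z < piece_right q ->
                  h z = (h q - piece_slope q * q) + piece_slope q * z)
    by (intros z Hz; apply (on_piece_range q z HU Hz)).
  pose proof (proj1 Hh) as Hcont.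
  intros z Hz. destruct (Req_dec z (piece_right q)) as [->|Hb].
  - apply eq_at_limit_point; [unfold I01; lra|apply Hcont; unfold I01; lra|].
    intros d Hd. pose proof (Rmin_l d (piece_right q - q)). pose proof (Rmin_r d (piece_right q - q)).
    pose proof (Rmin_pos d (piece_right q - q) Hd ltac:(lra)).
    exists (piece_right q - Rmin d (piece_right q - q) / 2).
    split; [unfold I01; lra|split; [rewrite Rabs_left1; lra|]].
    apply Hin. destruct (Req_dec (piece_right q - Rmin d (piece_right q - q) / 2) q);
      [left|right]; lra.
  - destruct (Req_dec z (piece_left q)) as [->|Ha]; [|apply Hin; right; lra].
    destruct (Req_dec (piece_left q) q) as [->|Nq]; [apply Hin; left; reflexivity|].
    apply eq_at_limit_point; [unfold I01; lra|apply Hcont; unfold I01; lra|].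
    intros d Hd. pose proof (Rmin_l d (q - piece_left q)). pose proof (Rmin_r d (q - piece_left q)).
    pose proof (Rmin_pos d (q - piece_left q) Hd ltac:(lra)).
    exists (piece_left q + Rmin d (q - piece_left q) / 2).
    split; [unfold I01; lra|split; [rewrite Rabs_right; lra|]].
    apply Hin. destruct (Req_dec (piece_left q + Rmin d (q - piece_left q) / 2) q);
      [left|right]; lra.
Qed.

Lemma piece_right_maximal q : loose q -> loose (piece_right q) ->
  forall eta, 0 < eta -> exists z, piece_right q < z < piece_right q + eta /\ h z <> piece_line q z.
Proof.
  intros HU HUb eta Heta. apply NNPP. intros Hn.
  destruct (piece_bounds q HU) as [P1 [P2 [P3 P4]]]. pose proof (loose_interior _ HUb) as Hb.
  destruct (loose_open _ HUb) as [et [Het HO]].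
  pose proof (Rmin_l (Rmin eta et) (1 - piece_right q)). pose proof (Rmin_r (Rmin eta et) (1 - piece_right q)).
  pose proof (Rmin_l eta et). pose proof (Rmin_r eta et).
  assert (Hm : 0 < Rmin (Rmin eta et) (1 - piece_right q)) by (repeat apply Rmin_pos; lra).
  set (y := piece_right q + Rmin (Rmin eta et) (1 - piece_right q) / 2).
  assert (HB : reach_right q y).
  { split; [unfold y; lra|]. intros z Hz. unfold y in Hz.
    destruct (Rlt_or_le z (piece_right q)) as [Hzb|Hzb]; [apply on_piece_range; auto;
      destruct (Req_dec z q); [left|right]; lra|].
    split; [apply HO, Rabs_lt_between; lra|].
    destruct (Req_dec z (piece_right q)) as [->|Hne];
      [rewrite (piece_affine q HU (piece_right q)) by lra; unfold piece_line; ring|].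
    apply NNPP. intros Hz'. apply Hn. exists z. split; [lra|auto]. }
  destruct (piece_right_lub q) as [B1 _]. specialize (B1 y HB). unfold y in B1. lra.
Qed.

Lemma piece_left_maximal q : loose q -> loose (piece_left q) ->
  forall eta, 0 < eta -> exists z, piece_left q - eta < z < piece_left q /\ h z <> piece_line q z.
Proof.
  intros HU HUa eta Heta. apply NNPP. intros Hn.
  destruct (piece_bounds q HU) as [P1 [P2 [P3 P4]]]. pose proof (loose_interior _ HUa) as Ha.
  destruct (loose_open _ HUa) as [et [Het HO]].
  pose proof (Rmin_l (Rmin eta et) (piece_left q)). pose proof (Rmin_r (Rmin eta et) (piece_left q)).
  pose proof (Rmin_l eta et). pose proof (Rmin_r eta et).
  assert (Hm : 0 < Rmin (Rmin eta et) (piece_left q)) by (repeat apply Rmin_pos; lra).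
  set (r := Rmin (Rmin eta et) (piece_left q) / 2).
  assert (HL : reach_left q (left_reach q + r)).
  { unfold piece_left in *. split; [unfold r in *; lra|]. intros z Hz.
    destruct (Rlt_or_le (q - left_reach q) z) as [Hzb|Hzb]; [apply on_piece_range; auto;
      destruct (Req_dec z q); [left|right]; unfold piece_left; lra|].
    split; [apply HO, Rabs_lt_between; unfold r in Hz; lra|].
    destruct (Req_dec z (q - left_reach q)) as [->|Hne];
      [rewrite (piece_affine q HU (q - left_reach q)) by (unfold piece_left; lra);
       unfold piece_line; ring|].
    apply NNPP. intros Hz'. apply Hn. exists z. split; [unfold r in Hz; lra|auto]. }
  destruct (left_reach_lub q) as [C1 _]. specialize (C1 _ HL). unfold r in C1. lra.
Qed.

Lemma piece_line_of_affine c d al be p : affine_on h c d al be -> c <= p < d -> loose p ->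
  piece_slope p = be /\ forall z, piece_line p z = al + be * z.
Proof.
  intros HL Hp HU. destruct (piece_slope_spec p HU) as [d1 [Hd1 HL1]].
  set (r := Rmin d1 (d - p) / 2).
  assert (Hr : 0 < r) by (unfold r; apply Rdiv_lt_0_compat; [apply Rmin_pos|]; lra).
  assert (Hr1 : r <= d1) by (unfold r; pose proof (Rmin_l d1 (d - p)); lra).
  assert (Hr2 : r < d - p) by (unfold r; pose proof (Rmin_r d1 (d - p)); lra).
  pose proof (HL1 (p + r) ltac:(lra)) as E1. rewrite (HL (p + r)) in E1 by lra.
  pose proof (HL p ltac:(lra)) as E2.
  assert (Hs : piece_slope p = be) by (apply (Rmult_eq_reg_l r); [rewrite E2 in E1; lra|lra]).
  split; [exact Hs|]. intros z. unfold piece_line. rewrite Hs, E2. ring.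
Qed.

Lemma piece_line_ext q p z0 z1 : z0 <> z1 -> piece_line q z0 = piece_line p z0 ->
  piece_line q z1 = piece_line p z1 -> forall z, piece_line q z = piece_line p z.
Proof.
  intros Hne E0 E1 z. unfold piece_line in *.
  assert (Hs : piece_slope q = piece_slope p) by (apply (Rmult_eq_reg_l (z0 - z1)); lra).
  rewrite Hs in *. lra.
Qed.

Lemma piece_sub q p z0 : loose q -> loose p -> (forall z, piece_line q z = piece_line p z) ->
  Rmax (piece_left q) (piece_left p) < z0 < Rmin (piece_right q) (piece_right p) ->
  piece_right p <= piece_right q /\ piece_left q <= piece_left p.
Proof.
  intros Hq Hp HL Hz.
  assert (Tr : forall z, on_piece p z -> on_piece q z) by (intros z [HU HE]; split; [auto|rewrite HL; auto]).
  pose proof (Rmax_l (piece_left q) (piece_left p)). pose proof (Rmax_r (piece_left q) (piece_left p)).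
  pose proof (Rmin_l (piece_right q) (piece_right p)). pose proof (Rmin_r (piece_right q) (piece_right p)).
  destruct (piece_bounds q Hq) as [Q1 [Q2 [Q3 Q4]]]. destruct (piece_bounds p Hp) as [R1 [R2 [R3 R4]]].
  split.
  - destruct (piece_right_lub q) as [B1 _]. apply B1. split; [auto|]. intros z Hz'.
    destruct (Rlt_or_le z (piece_right q)).
    + apply on_piece_range; auto. destruct (Req_dec z q); [left|right]; lra.
    + apply Tr, on_piece_inner; auto; lra.
  - destruct (left_reach_lub q) as [C1 _].
    assert (HLS : reach_left q (q - piece_left p)).
    { split; [lra|]. intros z Hz'. destruct (Rlt_or_le (piece_left q) z).
      + apply on_piece_range; auto. destruct (Req_dec z q); [left|right]; lra.
      + apply Tr, on_piece_inner; auto; lra. }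
    specialize (C1 _ HLS). unfold piece_left in *. lra.
Qed.

Lemma piece_unique q p z0 : loose q -> loose p ->
  Rmax (piece_left q) (piece_left p) < z0 < Rmin (piece_right q) (piece_right p) ->
  piece_left q = piece_left p /\ piece_right q = piece_right p.
Proof.
  intros Hq Hp Hz.
  pose proof (Rmax_l (piece_left q) (piece_left p)). pose proof (Rmax_r (piece_left q) (piece_left p)).
  pose proof (Rmin_l (piece_right q) (piece_right p)). pose proof (Rmin_r (piece_right q) (piece_right p)).
  set (z1 := (z0 + Rmin (piece_right q) (piece_right p)) / 2).
  assert (Hon : forall r z, r = q \/ r = p -> (z = z0 \/ z = z1) -> h z = piece_line r z).
  { intros r z Hr Hz'. destruct Hr as [->| ->]; apply on_piece_inner; auto;
      destruct Hz' as [->| ->]; unfold z1; lra. }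
  assert (L : forall z, piece_line q z = piece_line p z).
  { apply (piece_line_ext q p z0 z1); [unfold z1; lra| |];
      rewrite <- !Hon; auto. }
  destruct (piece_sub q p z0 Hq Hp L Hz).
  destruct (piece_sub p q z0 Hp Hq (fun z => eq_sym (L z))); [rewrite Rmax_comm, Rmin_comm; auto|].
  split; lra.
Qed.

Definition piece_index n := loose (qenum n) /\ forall k, (k < n)%nat -> loose (qenum k) ->
  ~ (piece_left (qenum k) = piece_left (qenum n) /\ piece_right (qenum k) = piece_right (qenum n)).
Definition lend n := piece_left (qenum n).
Definition rend n := piece_right (qenum n).

Lemma piece_index_exists k : loose (qenum k) ->
  exists m, piece_index m /\ lend m = piece_left (qenum k) /\ rend m = piece_right (qenum k).
Proof.
  intros HU.
  destruct (ex_least_index (fun j => loose (qenum j) /\ piece_left (qenum j) = piece_left (qenum k)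
                            /\ piece_right (qenum j) = piece_right (qenum k)) k)
    as [m [[Hm1 [Hm2 Hm3]] Hmin]]; [auto|].
  exists m. split; [split; [auto|]|auto].
  intros j Hj HUj [E1 E2]. apply (Hmin j Hj). split; [auto|split; congruence].
Qed.

Lemma piece_index_disjoint n m : piece_index n -> piece_index m -> n <> m ->
  rend n <= lend m \/ rend m <= lend n.
Proof.
  intros [Hn Nn] [Hm Nm] Hnm. apply NNPP. intros Hc.
  apply not_or_and in Hc. destruct Hc as [C1 C2]. apply Rnot_le_lt in C1, C2.
  destruct (piece_bounds _ Hn) as [A1 [A2 [A3 A4]]]. destruct (piece_bounds _ Hm) as [B1 [B2 [B3 B4]]].
  unfold lend, rend in *.
  set (lo := Rmax (piece_left (qenum n)) (piece_left (qenum m))).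
  set (hi := Rmin (piece_right (qenum n)) (piece_right (qenum m))).
  assert (Hlt : lo < hi) by (apply Rmax_lub_lt; apply Rmin_glb_lt; lra).
  destruct (piece_unique (qenum n) (qenum m) ((lo + hi) / 2) Hn Hm ltac:(fold lo hi; lra))
    as [E1 E2].
  destruct (Nat.lt_gt_cases n m) as [[H|H] _]; [auto| |].
  - exact (Nm n H Hn (conj E1 E2)).
  - exact (Nn m H Hm (conj (eq_sym E1) (eq_sym E2))).
Qed.

Lemma piece_index_cover x : loose x -> exists n, piece_index n /\ lend n <= x <= rend n.
Proof.
  intros HU. pose proof (loose_interior x HU) as Hx.
  destruct (loose_affine_right x HU) as [d [Hd HA]].
  pose proof (affine_on_of_chord h x (x + d) ltac:(lra) HA) as HL.
  destruct (loose_open x HU) as [eta [Heta HO]].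
  pose proof (Rmin_l d eta). pose proof (Rmin_r d eta). pose proof (Rmin_pos d eta Hd Heta).
  destruct (qenum_dense x (x + Rmin d eta / 2) ltac:(lra) ltac:(lra)) as [k [Hk1 Hk2]].
  assert (HUk : loose (qenum k)) by (apply HO, Rabs_lt_between; lra).
  pose proof (loose_interior _ HUk).
  destruct (piece_line_of_affine _ _ _ _ (qenum k) HL ltac:(lra) HUk) as [_ Hline].
  assert (Ha : piece_left (qenum k) <= x).
  { destruct (left_reach_lub (qenum k)) as [C1 _]. unfold piece_left.
    assert (HLS : reach_left (qenum k) (qenum k - x)).
    { split; [lra|]. intros z Hz. split; [apply HO, Rabs_lt_between; lra|].
      rewrite Hline. apply HL. lra. }
    specialize (C1 _ HLS). lra. }
  destruct (piece_bounds _ HUk) as [P1 _].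
  destruct (piece_index_exists k HUk) as [m [Hm [E1 E2]]].
  exists m. split; [auto|]. rewrite E1, E2. lra.
Qed.

Lemma piece_index_next n : piece_index n -> loose (rend n) -> exists m, piece_index m /\ lend m = rend n.
Proof.
  intros [HUn Nn] HUb. pose proof (loose_interior (rend n) HUb) as Hb.
  destruct (loose_affine_right (rend n) HUb) as [d [Hd HA]].
  pose proof (affine_on_of_chord h (rend n) (rend n + d) ltac:(lra) HA) as HL.
  destruct (loose_open (rend n) HUb) as [eta [Heta HO]].
  pose proof (Rmin_l d eta). pose proof (Rmin_r d eta). pose proof (Rmin_pos d eta Hd Heta).
  destruct (qenum_dense (rend n) (rend n + Rmin d eta / 2) ltac:(lra) ltac:(lra)) as [k [Hk1 Hk2]].
  assert (HUk : loose (qenum k)) by (apply HO, Rabs_lt_between; lra).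
  pose proof (loose_interior _ HUk).
  destruct (piece_line_of_affine _ _ _ _ (qenum k) HL ltac:(lra) HUk) as [_ Hline].
  assert (Ha : piece_left (qenum k) <= rend n).
  { destruct (left_reach_lub (qenum k)) as [C1 _]. unfold piece_left.
    assert (HLS : reach_left (qenum k) (qenum k - rend n)).
    { split; [lra|]. intros z Hz. split; [apply HO, Rabs_lt_between; lra|].
      rewrite Hline. apply HL. lra. }
    specialize (C1 _ HLS). lra. }
  destruct (piece_bounds _ HUk) as [P1 _]. destruct (piece_bounds _ HUn) as [Q1 [Q2 [Q3 Q4]]].
  assert (Ha' : piece_left (qenum k) = rend n).
  { destruct (Rle_lt_or_eq_dec _ _ Ha) as [Hlt|]; [exfalso|auto]. unfold rend in *.
    assert (Hm : Rmax (piece_left (qenum k)) (piece_left (qenum n)) < piece_right (qenum n))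
      by (apply Rmax_lub_lt; lra).
    assert (Hmi : Rmin (piece_right (qenum k)) (piece_right (qenum n)) = piece_right (qenum n))
      by (apply Rmin_right; lra).
    destruct (piece_unique (qenum k) (qenum n)
      ((Rmax (piece_left (qenum k)) (piece_left (qenum n)) + piece_right (qenum n)) / 2) HUk HUn
      ltac:(rewrite Hmi; lra)) as [_ E].
    lra. }
  destruct (piece_index_exists k HUk) as [m [Hm [E1 E2]]].
  exists m. split; [auto|]. rewrite E1. exact Ha'.
Qed.

Lemma piece_index_prev n : piece_index n -> loose (lend n) -> exists m, piece_index m /\ rend m = lend n.
Proof.
  intros [HUn Nn] HUa. pose proof (loose_interior (lend n) HUa) as Ha.
  destruct (loose_affine_left (lend n) HUa) as [d [Hd HA]].
  pose proof (affine_on_of_chord h (lend n - d) (lend n) ltac:(lra) HA) as HL.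
  destruct (loose_open (lend n) HUa) as [eta [Heta HO]].
  pose proof (Rmin_l (Rmin d eta) (lend n)). pose proof (Rmin_r (Rmin d eta) (lend n)).
  pose proof (Rmin_l d eta). pose proof (Rmin_r d eta).
  assert (Hr : 0 < Rmin (Rmin d eta) (lend n)) by (repeat apply Rmin_pos; lra).
  set (r := Rmin (Rmin d eta) (lend n)) in *.
  destruct (qenum_dense (lend n - r / 2) (lend n) ltac:(lra) ltac:(lra)) as [k [Hk1 Hk2]].
  assert (HUk : loose (qenum k)) by (apply HO, Rabs_lt_between; lra).
  pose proof (loose_interior _ HUk).
  destruct (piece_line_of_affine _ _ _ _ (qenum k) HL ltac:(lra) HUk) as [_ Hline].
  assert (Hb : lend n <= piece_right (qenum k)).
  { destruct (piece_right_lub (qenum k)) as [B1 _]. apply B1. split; [lra|].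
    intros z Hz. split; [apply HO, Rabs_lt_between; lra|]. rewrite Hline. apply HL. lra. }
  destruct (piece_bounds _ HUk) as [P1 [P2 [P3 P4]]]. destruct (piece_bounds _ HUn) as [Q1 [Q2 [Q3 Q4]]].
  assert (Hb' : piece_right (qenum k) = lend n).
  { destruct (Rle_lt_or_eq_dec _ _ Hb) as [Hlt|]; [exfalso|auto]. unfold lend in *.
    assert (Hm : piece_left (qenum n) < Rmin (piece_right (qenum k)) (piece_right (qenum n)))
      by (apply Rmin_glb_lt; lra).
    assert (Hma : Rmax (piece_left (qenum k)) (piece_left (qenum n)) = piece_left (qenum n))
      by (apply Rmax_right; lra).
    destruct (piece_unique (qenum k) (qenum n)
      ((piece_left (qenum n) + Rmin (piece_right (qenum k)) (piece_right (qenum n))) / 2) HUk HUn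
      ltac:(rewrite Hma; lra)) as [E _].
    lra. }
  destruct (piece_index_exists k HUk) as [m [Hm [E1 E2]]].
  exists m. split; [auto|]. rewrite E2. exact Hb'.
Qed.

Lemma piece_index_affine n : piece_index n ->
  affine_on h (lend n) (rend n) (h (qenum n) - piece_slope (qenum n) * qenum n) (piece_slope (qenum n)).
Proof. intros [HU _]. apply piece_affine, HU. Qed.

Lemma piece_index_loose n : piece_index n -> forall y, lend n < y < rend n -> loose y.
Proof. intros [HU _] y Hy. apply (on_piece_inner _ HU y Hy). Qed.

Lemma piece_index_bounds n : piece_index n -> 0 <= lend n /\ lend n < rend n /\ rend n <= 1.
Proof. intros [HU _]. destruct (piece_bounds _ HU) as [A1 [A2 [A3 A4]]]. unfold lend, rend. lra. Qed.

Lemma piece_index_kink n m : piece_index n -> piece_index m -> rend n = lend m -> loose (rend n) ->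
  piece_slope (qenum n) < piece_slope (qenum m).
Proof.
  intros Hn Hm E HUk. pose proof (piece_index_affine n Hn) as Ln. pose proof (piece_index_affine m Hm) as Lm.
  pose proof (piece_index_bounds n Hn). pose proof (piece_index_bounds m Hm).
  set (sn := piece_slope (qenum n)) in *. set (sm := piece_slope (qenum m)) in *.
  assert (Hk : h (qenum n) - sn * qenum n + sn * rend n = h (qenum m) - sm * qenum m + sm * rend n)
    by (rewrite <- (Ln (rend n)), <- (Lm (rend n)) by lra; reflexivity).
  assert (Hle : sn <= sm).
  { pose proof (affine_on_subdiff h h_convex (lend n) (rend n) _ _ (rend n) ltac:(lra) ltac:(lra)
                  ltac:(lra) Ln ltac:(lra) (rend m) ltac:(unfold I01; lra)) as S.
    rewrite (Ln (rend n)), (Lm (rend m)) in S by lra. nra. }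
  destruct (Rle_lt_or_eq_dec _ _ Hle) as [|Eq]; [auto|exfalso].
  destruct Hn as [HUn _].
  destruct (piece_right_maximal (qenum n) HUn HUk (rend m - rend n) ltac:(lra)) as [z [Hz Hne]].
  apply Hne. fold (rend n) in Hz. rewrite (Lm z) by lra. unfold piece_line. fold sn. rewrite Eq in *. lra.
Qed.

Lemma piece_index_cond_right n : piece_index n -> ~ cond_a h (Iphi g) (lend n) (rend n) ->
  h (rend n) = Iphi f (rend n) \/
  exists m, piece_index m /\ rend n = lend m /\ cond_a h (Iphi g) (lend m) (rend m).
Proof.
  intros Hn HN. destruct (classic (h (rend n) = Iphi f (rend n))) as [|Hne]; [left; auto|right].
  pose proof Hn as [HUn _]. pose proof (loose_interior _ HUn).
  destruct (piece_bounds _ HUn) as [A1 [A2 [A3 A4]]]. fold (rend n) (lend n) in *.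
  pose proof (piece_index_affine n Hn) as Ln.
  assert (Hb1 : rend n < 1).
  { destruct (Req_dec (rend n) 1) as [E|]; [|lra]. exfalso. apply Hne.
    rewrite E. apply h_ends. right. reflexivity. }
  destruct (classic (loose (rend n))) as [HUb|HUb].
  2: { exfalso. destruct (touch_of_not_loose (rend n) ltac:(unfold I01; lra) HUb) as [|Eg];
       [contradiction|]. apply HN, (touch_g_cond_a (lend n) (rend n) _ _ (rend n) A3 ltac:(lra) A2 Ln); auto; lra. }
  destruct (piece_index_next n Hn HUb) as [m [Hm Em]]. exists m. split; [auto|split; [auto|]].
  apply NNPP. intros HNm.
  pose proof Hm as [HUm _]. destruct (piece_bounds _ HUm) as [B1 [B2 [B3 B4]]].
  fold (rend m) (lend m) in *.
  pose proof (piece_index_affine m Hm) as Lm. rewrite Em in Lm, HNm.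
  assert (HUm' : forall y, rend n < y < rend m -> loose y)
    by (intros y Hy; apply (piece_index_loose m Hm); lra).
  destruct (outer_slope_left (lend n) (rend n) _ _ A3 ltac:(lra) HUb Ln (piece_index_loose n Hn)
              (piece_left_maximal (qenum n) HUn) HN) as [mu [Hmu Su]].
  destruct (outer_slope_right (rend n) (rend m) _ _ ltac:(lra) B2 HUb Lm HUm'
              (piece_right_maximal (qenum m) HUm) HNm) as [mw [Hmw Sw]].
  apply (no_kink_between (lend n) (rend n) (rend m) _ _ _ _ mu mw A3 ltac:(lra) ltac:(lra) B2 Ln Lm);
    auto.
  - apply piece_index_kink; auto.
  - exact (outer_slack_left (lend n) (rend n) _ _ A3 ltac:(lra) HUb Ln (piece_index_loose n Hn) HN).
  - exact (outer_slack_right (rend n) (rend m) _ _ ltac:(lra) B2 HUb Lm HUm' HNm).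
Qed.

Lemma piece_index_cond_left n : piece_index n -> ~ cond_a h (Iphi g) (lend n) (rend n) ->
  h (lend n) = Iphi f (lend n) \/
  exists m, piece_index m /\ rend m = lend n /\ cond_a h (Iphi g) (lend m) (rend m).
Proof.
  intros Hn HN. destruct (classic (h (lend n) = Iphi f (lend n))) as [|Hne]; [left; auto|right].
  pose proof Hn as [HUn _]. pose proof (loose_interior _ HUn).
  destruct (piece_bounds _ HUn) as [A1 [A2 [A3 A4]]]. fold (rend n) (lend n) in *.
  pose proof (piece_index_affine n Hn) as Ln.
  assert (Ha0 : 0 < lend n).
  { destruct (Req_dec (lend n) 0) as [E|]; [|lra]. exfalso. apply Hne.
    rewrite E. apply h_ends. left. reflexivity. }
  destruct (classic (loose (lend n))) as [HUa|HUa].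
  2: { exfalso. destruct (touch_of_not_loose (lend n) ltac:(unfold I01; lra) HUa) as [|Eg];
       [contradiction|]. apply HN, (touch_g_cond_a (lend n) (rend n) _ _ (lend n) A3 ltac:(lra) A2 Ln); auto; lra. }
  destruct (piece_index_prev n Hn HUa) as [m [Hm Em]]. exists m. split; [auto|split; [auto|]].
  apply NNPP. intros HNm.
  pose proof Hm as [HUm _]. destruct (piece_bounds _ HUm) as [B1 [B2 [B3 B4]]].
  fold (rend m) (lend m) in *.
  pose proof (piece_index_affine m Hm) as Lm. rewrite Em in Lm, HNm.
  assert (HUm' : forall y, lend m < y < lend n -> loose y)
    by (intros y Hy; apply (piece_index_loose m Hm); lra).
  destruct (outer_slope_left (lend m) (lend n) _ _ B3 ltac:(lra) HUa Lm HUm'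
              (piece_left_maximal (qenum m) HUm) HNm) as [mu [Hmu Su]].
  destruct (outer_slope_right (lend n) (rend n) _ _ ltac:(lra) A2 HUa Ln (piece_index_loose n Hn)
              (piece_right_maximal (qenum n) HUn) HN) as [mw [Hmw Sw]].
  apply (no_kink_between (lend m) (lend n) (rend n) _ _ _ _ mu mw B3 ltac:(lra) ltac:(lra) A2 Lm Ln);
    auto.
  - apply piece_index_kink; auto. rewrite Em. exact HUa.
  - exact (outer_slack_left (lend m) (lend n) _ _ B3 ltac:(lra) HUa Lm HUm' HNm).
  - exact (outer_slack_right (lend n) (rend n) _ _ ltac:(lra) A2 HUa Ln (piece_index_loose n Hn) HN).
Qed.

Lemma interval_structure_of_extreme : interval_structure f g h.
Proof.
  exists piece_index, lend, rend. split; [|split; [|split]].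
  - exact piece_index_bounds.
  - exact piece_index_disjoint.
  - intros x Hx Hno. destruct (classic (loose x)) as [HU|HU].
    + exfalso. destruct (piece_index_cover x HU) as [n [Hn Hxn]]. exact (Hno n Hn Hxn).
    + apply touch_of_not_loose; auto.
  - intros n Hn. split; [|split].
    + eexists. eexists. apply piece_index_affine, Hn.
    + intros x Hx. apply (piece_index_loose n Hn x Hx).
    + destruct (classic (cond_a h (Iphi g) (lend n) (rend n))) as [|HN]; [left; auto|right].
      intros x [-> | ->].
      * destruct (piece_index_cond_left n Hn HN) as [|[m [Hm [E C]]]]; [left; auto|right].
        exists m. split; [auto|split; [left; auto|auto]].
      * destruct (piece_index_cond_right n Hn HN) as [|[m [Hm [E C]]]]; [left; auto|right].
        exists m. split; [auto|split; [right; auto|auto]].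
Qed.

End Extreme.

Theorem corollary2 (f g : R -> R) :
  inF f -> inF g -> cont01 g -> majorizes f g ->
  forall h : R -> R, inIfg f g h ->
    (extreme_Ifg f g h <-> interval_structure f g h).
Proof.
  intros Hf Hg Hgc Hmaj h Hh. split.
  - exact (interval_structure_of_extreme f g h Hf Hg Hgc Hmaj Hh).
  - exact (extreme_of_interval_structure f g h Hh).
Qed.
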